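(* Let $H$ be a real Hilbert space, $f:H\to\mathbb{R}\cup\{+\infty\}$ a proper lower semicontinuous paraconcave function and $\bar x\in\operatorname{dom}f$ with $0\in\partial_pf(\bar x)$. Suppose $f$ is continuous at $\bar x$ and twice epi-differentiable (in the sense of Mosco) at $\bar x$ relative to $0$, and $\operatorname{qri}\big(N_M(\operatorname{gph}\partial_pf,(\bar x,0))\big)\neq\emptyset$. If $\bar x$ is a strict local minimizer of order two for $f$, then $f$ satisfies the second-order optimality conditions of the first, second and third kinds at $\bar x$.
   Context: $S_H$ is the unit sphere of $H$; $B(x,\delta)$ the open ball; weak convergence is denoted $\stackrel{w}{\to}$. $\bar x$ is a strict local minimizer of order two for $f$ if there exist $\beta,\delta>0$ with $f(x)\ge f(\bar x)+\frac{\beta}{2}\|x-\bar x\|^2$ for all $x\in B(\bar x,\delta)$. Proximal subdifferential: $\zeta\in\partial_p f(x)$ iff there exist $\sigma,\delta>0$ with $f(y)\ge f(x)+\langle\zeta,y-x\rangle-\frac{\sigma}{2}\|y-x\|^2$ whenever $\|y-x\|<\delta$. $\Delta_2 f(\bar x,p,t,u):=\frac{f(\bar x+tu)-f(\bar x)-t\langle p,u\rangle}{\frac12t^2}$, $f''_-(\bar x,p,h):=\liminf_{h'\to h,\,t\downarrow0}\Delta_2f(\bar x,p,t,h')$. Mixed contingent cone: $(h,z)\in T_M(\operatorname{gph}\partial_pf,(\bar x,p))$ iff there exist $t_n\to0^+$, $h_n\to h$ in norm, $z_n\stackrel{w}{\to}z$ with $p+t_nz_n\in\partial_pf(\bar x+t_nh_n)$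 for all $n$. $D^2_Mf(\bar x,p)(h):=\{z:(h,z)\in T_M(\operatorname{gph}\partial_pf,(\bar x,p))\}$. $N_M(\operatorname{gph}\partial_pf,(\bar x,p)):=\{(a,b):\langle a,h\rangle+\langle b,z\rangle\le0\ \forall(h,z)\in T_M(\operatorname{gph}\partial_pf,(\bar x,p))\}$; $\partial^2_Mf(\bar x,p)(h):=\{z:(z,-h)\in N_M(\operatorname{gph}\partial_pf,(\bar x,p))\}$. For a set-valued map $G$, $\operatorname{dom}G=\{h:G(h)\ne\emptyset\}$. $\operatorname{qri}A:=\{x\in A:\overline{\operatorname{cone}}(A-x)\text{ is a linear subspace}\}$. Second-order optimality conditions at $\bar x$: first kind: $\exists\beta>0$ with $f''_-(\bar x,0,h)\ge\beta$ for all $h\in S_H$; second kind: $\exists\beta>0$ such that for every $h\in\operatorname{dom}D^2_Mf(\bar x,0)\cap S_H$ there is $z\in D^2_Mf(\bar x,0)(h)$ with $\langle z,h\rangle\ge\beta$; third kind: $\exists\beta>0$ with $\langle z,h\rangle\ge\beta$ for all $h\in S_H\cap\operatorname{dom}\partial^2_Mf(\bar x,0)$, $z\in\partial^2_Mf(\bar x,0)(h)$. $f$ is paraconcave if $f-\frac1{2\lambda}\|\cdot\|^2$ is concave for some $\lambda>0$. Twice epi-differentiability (Mosco sense) at $\bar x$ relative to $p$: there is a proper function $\phi$ such that for every $t_n\to0^+$ the epigraphs of $\Delta_2f(\bar x,p,t_n,\cdot)$ Mosco converge to $\operatorname{epi}\phi$, where $C_n\to C$ in the Mosco sense means $C$ equals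 both the set of norm limits of sequences $x_n\in C_n$ and the set of weak limits of subsequences $x_{n_k}\in C_{n_k}$. *)

From Stdlib Require Import Reals Lra.
Open Scope R_scope.

Record Hilbert := {
  hcar :> Type;
  hzero : hcar;
  hadd : hcar -> hcar -> hcar;
  hopp : hcar -> hcar;
  hscal : R -> hcar -> hcar;
  hinner : hcar -> hcar -> R;
  hadd_assoc : forall x y z, hadd x (hadd y z) = hadd (hadd x y) z;
  hadd_comm : forall x y, hadd x y = hadd y x;
  hadd_0 : forall x, hadd x hzero = x;
  hadd_opp : forall x, hadd x (hopp x) = hzero;
  hscal_1 : forall x, hscal 1 x = x;
  hscal_assoc : forall a b x, hscal a (hscal b x) = hscal (a * b) x;
  hscal_distr_r : forall a x y, hscal a (hadd x y) = hadd (hscal a x) (hscal a y);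
  hscal_distr_l : forall a b x, hscal (a + b) x = hadd (hscal a x) (hscal b x);
  hinner_sym : forall x y, hinner x y = hinner y x;
  hinner_add_l : forall x y z, hinner (hadd x y) z = hinner x z + hinner y z;
  hinner_scal_l : forall a x y, hinner (hscal a x) y = a * hinner x y;
  hinner_pos : forall x, 0 <= hinner x x;
  hinner_def : forall x, hinner x x = 0 -> x = hzero;
  hcomplete : forall u : nat -> hcar,
    (forall eps, 0 < eps -> exists N, forall m n, (N <= m)%nat -> (N <= n)%nat ->
        sqrt (hinner (hadd (u m) (hopp (u n))) (hadd (u m) (hopp (u n)))) < eps) ->
    exists l, forall eps, 0 < eps -> exists N, forall n, (N <= n)%nat ->
        sqrt (hinner (hadd (u n) (hopp l)) (hadd (u n) (hopp l))) < eps
}.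

Arguments hzero {_}.
Arguments hadd {_}.
Arguments hopp {_}.
Arguments hscal {_}.
Arguments hinner {_}.

Definition hsub {H : Hilbert} (x y : H) : H := hadd x (hopp y).
Definition hnorm {H : Hilbert} (x : H) : R := sqrt (hinner x x).

Definition ball {H : Hilbert} (x : H) (d : R) (y : H) : Prop := hnorm (hsub y x) < d.

Definition cv_norm {H : Hilbert} (u : nat -> H) (l : H) : Prop :=
  forall eps, 0 < eps -> exists N, forall n, (N <= n)%nat -> hnorm (hsub (u n) l) < eps.
Definition cv_weak {H : Hilbert} (u : nat -> H) (l : H) : Prop :=
  forall w : H, Un_cv (fun n => hinner (u n) w) (hinner l w).

Inductive ereal := Fin (r : R) | Pinf.

Definition ele (a b : ereal) : Prop :=
  match a, b with
  | _, Pinf => True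
  | Pinf, Fin _ => False
  | Fin x, Fin y => x <= y
  end.
Definition elt (a b : ereal) : Prop :=
  match a, b with
  | Fin _, Pinf => True
  | Pinf, _ => False
  | Fin x, Fin y => x < y
  end.

Section Fun.
Context {H : Hilbert}.
Implicit Types (f : H -> ereal).

Definition in_dom f (x : H) : Prop := exists r, f x = Fin r.
Definition proper f : Prop := exists x, in_dom f x.

Definition lsc f : Prop :=
  forall (x : H) (a : R), elt (Fin a) (f x) ->
    exists d, 0 < d /\ forall y, ball x d y -> elt (Fin a) (f y).

Definition continuous_at f (x : H) : Prop :=
  exists fx, f x = Fin fx /\
    forall eps, 0 < eps -> exists d, 0 < d /\
      forall y, ball x d y -> exists fy, f y = Fin fy /\ Rabs (fy - fx) < eps.

Definition shift_sq f (c : R) (x : H) : ereal :=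
  match f x with Fin a => Fin (a - c * (hnorm x) ^ 2) | Pinf => Pinf end.

(** concavity of an extended-valued function = convexity of its hypograph *)
Definition concave (g : H -> ereal) : Prop :=
  forall (x y : H) (r s t : R), 0 <= t <= 1 ->
    ele (Fin r) (g x) -> ele (Fin s) (g y) ->
    ele (Fin (t * r + (1 - t) * s)) (g (hadd (hscal t x) (hscal (1 - t) y))).

Definition paraconcave f : Prop :=
  exists lam, 0 < lam /\ concave (shift_sq f (1 / (2 * lam))).

Definition prox_subdiff f (x zeta : H) : Prop :=
  exists fx, f x = Fin fx /\
  exists sigma delta, 0 < sigma /\ 0 < delta /\
    forall y, hnorm (hsub y x) < delta ->
      ele (Fin (fx + hinner zeta (hsub y x) - sigma / 2 * (hnorm (hsub y x)) ^ 2)) (f y).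

Definition strict_lmin_order2 f (xb : H) : Prop :=
  exists beta delta, 0 < beta /\ 0 < delta /\
  exists fxb, f xb = Fin fxb /\
    forall x, ball xb delta x ->
      ele (Fin (fxb + beta / 2 * (hnorm (hsub x xb)) ^ 2)) (f x).

Definition Delta2 f (xb p : H) (t : R) (u : H) : ereal :=
  match f xb, f (hadd xb (hscal t u)) with
  | Fin a, Fin b => Fin ((b - a - t * hinner p u) / (t ^ 2 / 2))
  | _, _ => Pinf
  end.

(** "f''_-(xb,p,h) >= beta", where f''_- = liminf_{h'->h, t↓0} Δ2 f(xb,p,t,h'),
    written out: for every eps>0 the infimum over a punctured neighbourhood is >= beta-eps *)
Definition lower_second_subderiv_ge f (xb p h : H) (beta : R) : Prop :=
  forall eps, 0 < eps -> exists delta, 0 < delta /\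
    forall (h' : H) (t : R), hnorm (hsub h' h) < delta -> 0 < t < delta ->
      ele (Fin (beta - eps)) (Delta2 f xb p t h').

(** mixed contingent cone to gph ∂_p f at (xb,p) *)
Definition TM f (xb p : H) (h z : H) : Prop :=
  exists (t : nat -> R) (hs zs : nat -> H),
    (forall n, 0 < t n) /\ Un_cv t 0 /\ cv_norm hs h /\ cv_weak zs z /\
    forall n, prox_subdiff f (hadd xb (hscal (t n) (hs n))) (hadd p (hscal (t n) (zs n))).

Definition D2M f (xb p : H) (h z : H) : Prop := TM f xb p h z.

Definition NM f (xb p : H) (a b : H) : Prop :=
  forall h z, TM f xb p h z -> hinner a h + hinner b z <= 0.

Definition partial2M f (xb p : H) (h z : H) : Prop := NM f xb p z (hopp h).

Definition cone_shift (A : H -> H -> Prop) (a b : H) (u v : H) : Prop :=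
  exists (l : R) (a' b' : H), 0 <= l /\ A a' b' /\
    u = hscal l (hsub a' a) /\ v = hscal l (hsub b' b).

Definition closure2 (S : H -> H -> Prop) (u v : H) : Prop :=
  forall eps, 0 < eps -> exists u' v', S u' v' /\ hnorm (hsub u u') + hnorm (hsub v v') < eps.

Definition lin_subspace2 (S : H -> H -> Prop) : Prop :=
  S hzero hzero /\
  (forall u v u' v', S u v -> S u' v' -> S (hadd u u') (hadd v v')) /\
  (forall l u v, S u v -> S (hscal l u) (hscal l v)).

Definition in_qri (A : H -> H -> Prop) (a b : H) : Prop :=
  A a b /\ lin_subspace2 (closure2 (cone_shift A a b)).

Definition qri_nonempty (A : H -> H -> Prop) : Prop := exists a b, in_qri A a b.

Definition mosco_cv (C : nat -> H -> R -> Prop) (Cl : H -> R -> Prop) : Prop :=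
  (forall u r, Cl u r <->
     exists (us : nat -> H) (rs : nat -> R),
       (forall n, C n (us n) (rs n)) /\ cv_norm us u /\ Un_cv rs r) /\
  (forall u r, Cl u r <->
     exists (k : nat -> nat) (us : nat -> H) (rs : nat -> R),
       (forall i, (k i < k (S i))%nat) /\ (forall i, C (k i) (us i) (rs i)) /\
       cv_weak us u /\ Un_cv rs r).

Definition epi (g : H -> ereal) (u : H) (r : R) : Prop := ele (g u) (Fin r).

Definition twice_epi_diff_mosco f (xb p : H) : Prop :=
  exists phi : H -> ereal, proper phi /\
    forall t : nat -> R, (forall n, 0 < t n) -> Un_cv t 0 ->
      mosco_cv (fun n => epi (Delta2 f xb p (t n))) (epi phi).

Definition soc_first_kind f (xb : H) : Prop :=
  exists beta, 0 < beta /\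
    forall h, hnorm h = 1 -> lower_second_subderiv_ge f xb hzero h beta.

Definition soc_second_kind f (xb : H) : Prop :=
  exists beta, 0 < beta /\
    forall h, hnorm h = 1 -> (exists z, D2M f xb hzero h z) ->
      exists z, D2M f xb hzero h z /\ beta <= hinner z h.

Definition soc_third_kind f (xb : H) : Prop :=
  exists beta, 0 < beta /\
    forall h z, hnorm h = 1 -> (exists z', partial2M f xb hzero h z') ->
      partial2M f xb hzero h z -> beta <= hinner z h.

End Fun.

(* Paraconcavity makes [f - c ||.||^2] concave, so a proximal subgradient [p] at [x]
   yields the global majorant [f y <= f x + <p, y - x> + c ||y - x||^2]; at [xb] this
   makes [f] finite.  Quadratic growth at [xb] bounds the second-order quotients
   [Delta2 f xb 0 t u] below by [beta ||u||^2], which is the first-kind condition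
   and also gives [phi h >= beta] for the Mosco limit [phi] on the unit sphere.
   If [z] is in [D2M f xb 0 h] along [t_n, h_n, z_n], the majorant at the points
   [xb + t_n h_n] and concavity along a recovery sequence for [phi h] give
   [phi h <= <z, h>]: second kind.  Finally [D2M f xb 0] has full domain: proximal
   subgradients are dense (Borwein-Preiss), those near [xb + t u] are [O(t)], and their
   rescalings have weakly convergent subsequences; pairing [partial2M f xb 0 h] with
   an element of [D2M f xb 0 (- h)] then gives the third kind. *)

From Stdlib Require Import Reals Lra Lia Psatz Classical ClassicalEpsilon.
From Stdlib Require Rtopology.
Open Scope R_scope.

Arguments hadd_assoc {_}. Arguments hadd_comm {_}. Arguments hadd_0 {_}.
Arguments hadd_opp {_}. Arguments hscal_1 {_}. Arguments hscal_assoc {_}.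
Arguments hscal_distr_r {_}. Arguments hscal_distr_l {_}. Arguments hinner_sym {_}.
Arguments hinner_add_l {_}. Arguments hinner_scal_l {_}. Arguments hinner_pos {_}.
Arguments hinner_def {_}. Arguments hcomplete {_}.

Section HilbertAlgebra.
Context {H : Hilbert}.
Implicit Types (x y z : H).

Lemma hadd_0_l x : hadd hzero x = x.
Proof. rewrite hadd_comm; apply hadd_0. Qed.

Lemma hadd_cancel_r x y z : hadd x z = hadd y z -> x = y.
Proof.
  intros E. rewrite <- (hadd_0 x), <- (hadd_0 y), <- (hadd_opp z), !hadd_assoc, E.
  reflexivity.
Qed.

Lemma hscal_0_l x : hscal 0 x = hzero.
Proof.
  apply (hadd_cancel_r _ _ (hscal 0 x)).
  rewrite <- hscal_distr_l, Rplus_0_l, hadd_0_l. reflexivity.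
Qed.

Lemma hopp_scal x : hopp x = hscal (-1) x.
Proof.
  assert (E : hadd x (hscal (-1) x) = hzero).
  { rewrite <- (hscal_1 x) at 1. rewrite <- hscal_distr_l.
    replace (1 + -1) with 0 by ring. apply hscal_0_l. }
  rewrite <- (hadd_0 (hopp x)), <- E, hadd_assoc, (hadd_comm (hopp x) x),
    hadd_opp, hadd_0_l. reflexivity.
Qed.

Lemma hinner_0_l y : hinner hzero y = 0.
Proof. rewrite <- (hscal_0_l y), hinner_scal_l. ring. Qed.

Lemma hinner_0_r y : hinner y hzero = 0.
Proof. rewrite hinner_sym; apply hinner_0_l. Qed.

Lemma hinner_add_r x y z : hinner x (hadd y z) = hinner x y + hinner x z.
Proof. rewrite !(hinner_sym x), hinner_add_l. reflexivity. Qed.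

Lemma hinner_scal_r a x y : hinner x (hscal a y) = a * hinner x y.
Proof. rewrite !(hinner_sym x), hinner_scal_l. reflexivity. Qed.

Lemma hsub_inner_diag_uniq x y : hinner (hsub x y) (hsub x y) = 0 -> x = y.
Proof.
  intros E. apply hinner_def in E. unfold hsub in E.
  rewrite <- (hadd_0 x), <- (hadd_opp y), (hadd_comm y), hadd_assoc, E, hadd_0_l.
  reflexivity.
Qed.

Lemma hsub_diag x : hsub x x = hzero.
Proof. apply hadd_opp. Qed.

End HilbertAlgebra.

(* Vector identities are proved by [apply hsub_inner_diag_uniq; hexpand; ring]:
   expanding [<x - y, x - y>] into inner products of the atoms turns them into
   ring identities. *)
Ltac hexpand := unfold hsub in *;
  repeat rewrite ?hopp_scal, ?hinner_add_l, ?hinner_add_r, ?hinner_scal_l,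
    ?hinner_scal_r, ?hinner_0_l, ?hinner_0_r.
Ltac hexpand_in P := unfold hsub in P;
  repeat rewrite ?hopp_scal, ?hinner_add_l, ?hinner_add_r, ?hinner_scal_l,
    ?hinner_scal_r, ?hinner_0_l, ?hinner_0_r in P.

Lemma hsub_hadd_scal_l {H : Hilbert} (x : H) t v : hsub (hadd x (hscal t v)) x = hscal t v.
Proof. apply hsub_inner_diag_uniq. hexpand. ring. Qed.

Lemma hsub_hadd_scal {H : Hilbert} (x : H) t v w :
  hsub (hadd x (hscal t v)) (hadd x (hscal t w)) = hscal t (hsub v w).
Proof. apply hsub_inner_diag_uniq. hexpand. ring. Qed.

Section Norms.
Context {H : Hilbert}.
Implicit Types (x y z : H).

Lemma hnorm_nonneg x : 0 <= hnorm x.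
Proof. apply sqrt_pos. Qed.

Lemma hnorm_sq x : hnorm x ^ 2 = hinner x x.
Proof. unfold hnorm. simpl. rewrite Rmult_1_r. apply sqrt_sqrt, hinner_pos. Qed.

Lemma hnorm_mul_self x : hnorm x * hnorm x = hinner x x.
Proof. unfold hnorm. apply sqrt_sqrt, hinner_pos. Qed.

Lemma hnorm_zero : hnorm (@hzero H) = 0.
Proof. unfold hnorm. rewrite hinner_0_l. apply sqrt_0. Qed.

Lemma Rle_of_pow2_le a b : 0 <= b -> a ^ 2 <= b ^ 2 -> a <= b.
Proof. intros Hb Hs. destruct (Rle_or_lt a b); auto. nra. Qed.

Lemma hnorm_le_of_sq x b : 0 <= b -> hinner x x <= b ^ 2 -> hnorm x <= b.
Proof. intros Hb Hs. apply Rle_of_pow2_le; auto. rewrite hnorm_sq; auto. Qed.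

Lemma hnorm_lt_of_sq x b : 0 < b -> hinner x x < b ^ 2 -> hnorm x < b.
Proof.
  intros Hb Hx. rewrite <- hnorm_sq in Hx. destruct (Rle_or_lt b (hnorm x)); auto.
  assert (b ^ 2 <= hnorm x ^ 2) by nra. lra.
Qed.

Lemma cauchy_schwarz_sq x y : hinner x y ^ 2 <= hinner x x * hinner y y.
Proof.
  destruct (Req_dec (hinner y y) 0) as [E|E].
  - apply hinner_def in E. subst y. rewrite hinner_0_r, hinner_0_l. nra.
  - assert (Hy : 0 < hinner y y) by (generalize (hinner_pos y); lra).
    set (t := hinner x y / hinner y y).
    assert (Ht : t * hinner y y = hinner x y) by (unfold t; field; lra).
    assert (P := hinner_pos (hsub x (hscal t y))). hexpand_in P.
    rewrite (hinner_sym y x) in P. nra.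
Qed.

Lemma cauchy_schwarz x y : Rabs (hinner x y) <= hnorm x * hnorm y.
Proof.
  apply Rle_of_pow2_le.
  - apply Rmult_le_pos; apply hnorm_nonneg.
  - rewrite pow2_abs, Rpow_mult_distr, !hnorm_sq. apply cauchy_schwarz_sq.
Qed.

Lemma cauchy_schwarz_le x y : hinner x y <= hnorm x * hnorm y.
Proof. eapply Rle_trans; [apply Rle_abs | apply cauchy_schwarz]. Qed.

Lemma cauchy_schwarz_ge x y : - (hnorm x * hnorm y) <= hinner x y.
Proof.
  assert (C := cauchy_schwarz x y). assert (A := Rle_abs (- hinner x y)).
  rewrite Rabs_Ropp in A. lra.
Qed.

Lemma hnorm_scal a x : hnorm (hscal a x) = Rabs a * hnorm x.
Proof.
  unfold hnorm. rewrite hinner_scal_l, hinner_scal_r, <- Rmult_assoc.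
  rewrite sqrt_mult_alt by nra.
  f_equal. rewrite <- sqrt_Rsqr_abs. reflexivity.
Qed.

Lemma hnorm_triangle x y : hnorm (hadd x y) <= hnorm x + hnorm y.
Proof.
  apply Rle_of_pow2_le; [generalize (hnorm_nonneg x) (hnorm_nonneg y); lra|].
  rewrite hnorm_sq. hexpand. rewrite (hinner_sym y x).
  assert (C := cauchy_schwarz_le x y).
  assert (A := hnorm_sq x). assert (B := hnorm_sq y). nra.
Qed.

Lemma hnorm_opp x : hnorm (hopp x) = hnorm x.
Proof. rewrite hopp_scal, hnorm_scal, Rabs_left by lra. ring. Qed.

Lemma hnorm_sub_sym x y : hnorm (hsub x y) = hnorm (hsub y x).
Proof.
  replace (hsub x y) with (hopp (hsub y x)) by
    (apply hsub_inner_diag_uniq; hexpand; rewrite (hinner_sym y x); ring).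
  apply hnorm_opp.
Qed.

Lemma hnorm_sub_triangle x y z : hnorm (hsub x z) <= hnorm (hsub x y) + hnorm (hsub y z).
Proof.
  replace (hsub x z) with (hadd (hsub x y) (hsub y z)) by
    (apply hsub_inner_diag_uniq; hexpand;
     rewrite ?(hinner_sym y x), ?(hinner_sym z x), ?(hinner_sym z y); ring).
  apply hnorm_triangle.
Qed.

Lemma hnorm_sub_diag_uniq x y : hnorm (hsub x y) = 0 -> x = y.
Proof. intros E. apply hsub_inner_diag_uniq. rewrite <- hnorm_sq, E. ring. Qed.

Lemma hnorm_near_unit x y e : hnorm y = 1 -> hnorm (hsub x y) < e ->
  1 - e < hnorm x < 1 + e.
Proof.
  intros Hy Hx. assert (T1 := hnorm_triangle (hsub x y) y).
  assert (T2 := hnorm_triangle (hsub y x) x).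
  replace (hadd (hsub x y) y) with x in T1 by (apply hsub_inner_diag_uniq; hexpand; ring).
  replace (hadd (hsub y x) x) with y in T2 by (apply hsub_inner_diag_uniq; hexpand; ring).
  rewrite hnorm_sub_sym in T2. lra.
Qed.

Lemma hnorm_bound_of_inner z K :
  (forall e : H, hnorm e <= 1 -> - K <= hinner z e) -> hnorm z <= K.
Proof.
  intros Hall. destruct (Req_dec (hnorm z) 0) as [E|E].
  - rewrite E. specialize (Hall hzero). rewrite hnorm_zero, hinner_0_r in Hall. lra.
  - assert (Hp := hnorm_nonneg z).
    specialize (Hall (hscal (- / hnorm z) z)).
    rewrite hnorm_scal, hinner_scal_r, <- hnorm_mul_self in Hall.
    rewrite Rabs_left in Hall by (assert (0 < / hnorm z) by (apply Rinv_0_lt_compat; lra); lra).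
    replace (- - / hnorm z * hnorm z) with 1 in Hall by (field; lra).
    replace (- / hnorm z * (hnorm z * hnorm z)) with (- hnorm z) in Hall by (field; lra).
    lra.
Qed.

End Norms.

Lemma Rle_of_le_add_small (r M K s0 : R) : 0 < s0 -> 0 <= K ->
  (forall s, 0 < s < s0 -> r <= M + s * K) -> r <= M.
Proof.
  intros Hs0 HK Hall. destruct (Rle_or_lt r M) as [|Hlt]; auto.
  set (s := Rmin (s0 / 2) ((r - M) / (2 * (K + 1)))).
  assert (Hs1 : s <= s0 / 2) by apply Rmin_l.
  assert (Hs2 : s <= (r - M) / (2 * (K + 1))) by apply Rmin_r.
  assert (Hs3 : 0 < s).
  { apply Rmin_glb_lt; [lra|]. apply Rdiv_lt_0_compat; lra. }
  assert (s * (2 * (K + 1)) <= r - M).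
  { apply Rmult_le_reg_r with (/ (2 * (K + 1))); [apply Rinv_0_lt_compat; lra|].
    rewrite Rmult_assoc, Rinv_r by lra. unfold Rdiv in Hs2. lra. }
  specialize (Hall s ltac:(lra)). nra.
Qed.

Lemma Rlt_mul_of_lt_div (a b c : R) : 0 < c -> a < b / c -> a * c < b.
Proof.
  intros Hc Ha. apply (Rmult_lt_compat_r c) in Ha; auto.
  replace (b / c * c) with b in Ha by (field; lra). exact Ha.
Qed.

Lemma Rle_div_of_le_mul (a b c : R) : 0 < c -> a <= b * c -> a / c <= b.
Proof.
  intros Hc Hab. apply (Rmult_le_reg_r c); auto.
  replace (a / c * c) with a by (field; lra). exact Hab.
Qed.

Section Paraconcave.
Context {H : Hilbert} (f : H -> ereal) (c : R) (Hc : 0 < c) (Hconc : concave (shift_sq f c)).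

Lemma ele_shift_sq (y : H) (r : R) : ele (Fin r) (f y) ->
  ele (Fin (r - c * hnorm y ^ 2)) (shift_sq f c y).
Proof. unfold shift_sq. destruct (f y); simpl; auto. intros; lra. Qed.

(* Concavity of [f - c ||.||^2] on the segment from [x - s (y - x)] to [y], evaluated
   at [x]; the [||x||^2] terms cancel and leave a curvature term in [||y - x||^2]. *)
Lemma paraconcave_secant (x y : H) (s q r fx : R) : 0 < s -> f x = Fin fx ->
  ele (Fin q) (f (hadd x (hscal (- s) (hsub y x)))) -> ele (Fin r) (f y) ->
  q + s * r <= (1 + s) * fx + c * s * (1 + s) * hnorm (hsub y x) ^ 2.
Proof.
  intros Hs Efx Hq Hr. set (a := hadd x (hscal (- s) (hsub y x))) in *.
  assert (Ht : 0 <= 1 / (1 + s) <= 1).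
  { split; [apply Rlt_le, Rdiv_lt_0_compat; lra|].
    apply Rle_div_of_le_mul; lra. }
  assert (Hcv := Hconc a y _ _ _ Ht (ele_shift_sq a q Hq) (ele_shift_sq y r Hr)).
  replace (hadd (hscal (1 / (1 + s)) a) (hscal (1 - 1 / (1 + s)) y)) with x in Hcv
    by (apply hsub_inner_diag_uniq; unfold a; hexpand; rewrite ?(hinner_sym y x);
        field; lra).
  unfold shift_sq in Hcv. rewrite Efx in Hcv. cbn [ele] in Hcv.
  rewrite !hnorm_sq in Hcv. rewrite hnorm_sq.
  assert (E : (1 + s) * (1 / (1 + s) * (q - c * hinner a a)
                 + (1 - 1 / (1 + s)) * (r - c * hinner y y))
              = q + s * r - c * (hinner a a + s * hinner y y)) by (field; lra).
  assert (Ea : hinner a a + s * hinner y y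
               = (1 + s) * hinner x x + s * (1 + s) * hinner (hsub y x) (hsub y x))
    by (unfold a; hexpand; rewrite ?(hinner_sym y x); ring).
  apply (Rmult_le_compat_l (1 + s)) in Hcv; [|lra].
  rewrite E, Ea in Hcv. nra.
Qed.

Lemma prox_subdiff_majorant (x p : H) (fx : R) : f x = Fin fx -> prox_subdiff f x p ->
  forall y, exists fy, f y = Fin fy /\
    fy <= fx + hinner p (hsub y x) + c * hnorm (hsub y x) ^ 2.
Proof.
  intros Efx [fx' [Efx' [sig [del [Hsig [Hdel Hprox]]]]]] y.
  rewrite Efx in Efx'. injection Efx' as <-.
  set (d := hsub y x). assert (Hnd := hnorm_nonneg d).
  set (s0 := del / (hnorm d + 1)).
  assert (Hs0 : 0 < s0) by (apply Rdiv_lt_0_compat; lra).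
  set (K := (sig / 2 + c) * hnorm d ^ 2).
  (* The proximal inequality at the reflected point [x - s (y - x)] against the secant
     inequality, then [s -> 0]; taking [r] large shows [f y] is finite. *)
  assert (Key : forall r, ele (Fin r) (f y) -> forall s, 0 < s < s0 ->
            r <= fx + hinner p d + c * hnorm d ^ 2 + s * K).
  { intros r Hr s Hs.
    set (a := hadd x (hscal (- s) d)).
    assert (Had : hsub a x = hscal (- s) d)
      by (apply hsub_inner_diag_uniq; unfold a; hexpand; ring).
    assert (Hna : hnorm (hsub a x) < del).
    { rewrite Had, hnorm_scal, Rabs_left by lra.
      assert (s * (hnorm d + 1) < del) by (apply Rlt_mul_of_lt_div; unfold s0 in Hs; lra).
      nra. }
    assert (Hq := Hprox a Hna).
    rewrite Had, hinner_scal_r, hnorm_scal, Rabs_left in Hq by lra.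
    assert (L := paraconcave_secant x y s _ r fx (proj1 Hs) Efx Hq Hr). fold d in L.
    replace ((- - s * hnorm d) ^ 2) with (s * s * hnorm d ^ 2) in L by ring.
    apply (Rmult_le_reg_l s); [lra|]. unfold K. lra. }
  assert (HK : 0 <= K) by (unfold K; nra).
  destruct (f y) as [fy|] eqn:Efy.
  - exists fy. split; auto.
    apply (Rle_of_le_add_small _ _ K s0); auto. intros s Hs. apply (Key fy); simpl; lra.
  - exfalso.
    assert (Hr := Key (fx + hinner p d + c * hnorm d ^ 2 + s0 * K + 1) I (s0 / 2)
                    ltac:(lra)).
    nra.
Qed.

Lemma prox_subdiff_finite_valued (x p : H) (fx : R) : f x = Fin fx -> prox_subdiff f x p ->
  exists F : H -> R, forall y, f y = Fin (F y).
Proof.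
  intros Efx Hp.
  exists (fun y => match f y with Fin r => r | Pinf => 0 end). intros y.
  destruct (prox_subdiff_majorant x p fx Efx Hp y) as [fy [Efy _]]. rewrite Efy. reflexivity.
Qed.

End Paraconcave.

Definition eventually (P : nat -> Prop) : Prop := exists N, forall n, (N <= n)%nat -> P n.

Lemma eventually_and (P Q : nat -> Prop) :
  eventually P -> eventually Q -> eventually (fun n => P n /\ Q n).
Proof.
  intros [N1 H1] [N2 H2]. exists (max N1 N2). intros n Hn.
  split; [apply H1 | apply H2]; lia.
Qed.

Lemma eventually_impl (P Q : nat -> Prop) :
  eventually P -> (forall n, P n -> Q n) -> eventually Q.
Proof. intros [N HN] Hi. exists N. intros n Hn. apply Hi, HN, Hn. Qed.

Lemma eventually_witness (P : nat -> Prop) : eventually P -> exists n, P n.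
Proof. intros [N HN]. exists N. apply HN. lia. Qed.

Lemma eventually_not_frequently (P : nat -> Prop) :
  ~ eventually P -> forall N, exists n, (N <= n)%nat /\ ~ P n.
Proof.
  intros Hn N. apply NNPP. intros Hc. apply Hn. exists N. intros n Hle.
  apply NNPP. intros HP. apply Hc. exists n. auto.
Qed.

Lemma eventually_Un_cv (u : nat -> R) (l eps : R) : Un_cv u l -> 0 < eps ->
  eventually (fun n => Rabs (u n - l) < eps).
Proof. intros Hu He. destruct (Hu eps He) as [N HN]. exists N. intros n Hn. apply HN; lia. Qed.

Lemma eventually_cv_norm {H : Hilbert} (u : nat -> H) (l : H) (eps : R) :
  cv_norm u l -> 0 < eps -> eventually (fun n => hnorm (hsub (u n) l) < eps).
Proof. intros Hu He. destruct (Hu eps He) as [N HN]. exists N. intros n Hn. apply HN; lia. Qed.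

Lemma Rinv_INR_S_eventually_lt (eps : R) : 0 < eps ->
  eventually (fun n => / (INR n + 1) < eps).
Proof.
  intros He. destruct (archimed_cor1 eps He) as [N [HN HN0]]. exists N. intros n Hn.
  assert (0 < INR N) by (apply lt_0_INR; lia).
  assert (INR N <= INR n) by (apply le_INR; lia).
  eapply Rle_lt_trans; [|apply HN]. apply Rinv_le_contravar; lra.
Qed.

Definition subseq_index (k : nat -> nat) : Prop := forall i, (k i < k (S i))%nat.

Lemma subseq_index_ge (k : nat -> nat) : subseq_index k -> forall i, (i <= k i)%nat.
Proof. intros Hk. induction i; [lia|]. specialize (Hk i). lia. Qed.

Lemma subseq_index_lt (k : nat -> nat) :
  subseq_index k -> forall i j, (i < j)%nat -> (k i < k j)%nat.
Proof.
  intros Hk i j Hij. induction j; [lia|].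
  destruct (Nat.eq_dec i j) as [->|Hne]; [apply Hk|].
  specialize (Hk j). assert (k i < k j)%nat by (apply IHj; lia). lia.
Qed.

Fixpoint select (g : nat -> nat -> nat) (i : nat) : nat :=
  match i with O => g O O | S i' => g (S i') (S (select g i')) end.

Lemma subseq_index_selection (P : nat -> nat -> Prop) :
  (forall i N, exists n, (N <= n)%nat /\ P i n) ->
  exists k, subseq_index k /\ forall i, P i (k i).
Proof.
  intros Hex.
  set (g := fun i N => proj1_sig (constructive_indefinite_description _ (Hex i N))).
  assert (Hg : forall i N, (N <= g i N)%nat /\ P i (g i N))
    by (intros i N; unfold g; destruct (constructive_indefinite_description _ _); auto).
  exists (select g). split.
  - intros i. simpl. destruct (Hg (S i) (S (select g i))). lia.
  - intros [|i]; simpl; apply Hg.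
Qed.

Lemma frequently_subseq (Q : nat -> Prop) : (forall N, exists n, (N <= n)%nat /\ Q n) ->
  exists k, subseq_index k /\ forall i, Q (k i).
Proof. intros Hex. apply (subseq_index_selection (fun _ => Q)). auto. Qed.

Lemma Un_cv_const (r : R) : Un_cv (fun _ => r) r.
Proof. intros eps He. exists O. intros. unfold R_dist. rewrite Rminus_diag, Rabs_R0. auto. Qed.

Lemma Un_cv_ext (u v : nat -> R) l : (forall n, u n = v n) -> Un_cv u l -> Un_cv v l.
Proof.
  intros E Hu eps He. destruct (Hu eps He) as [N HN]. exists N. intros n Hn. rewrite <- E. auto.
Qed.

Lemma Un_cv_scal (u : nat -> R) (a l : R) : Un_cv u l -> Un_cv (fun n => a * u n) (a * l).
Proof. intros Hu. apply (CV_mult (fun _ => a) u a l); [apply Un_cv_const | exact Hu]. Qed.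

Lemma Un_cv_subseq (u : nat -> R) (l : R) (k : nat -> nat) :
  subseq_index k -> Un_cv u l -> Un_cv (fun i => u (k i)) l.
Proof.
  intros Hk Hu eps He. destruct (Hu eps He) as [N HN]. exists N.
  intros n Hn. apply HN. assert (Hg := subseq_index_ge k Hk n). lia.
Qed.

Lemma cv_norm_subseq {H : Hilbert} (u : nat -> H) (l : H) (k : nat -> nat) :
  subseq_index k -> cv_norm u l -> cv_norm (fun i => u (k i)) l.
Proof.
  intros Hk Hu eps He. destruct (Hu eps He) as [N HN]. exists N.
  intros n Hn. apply HN. assert (Hg := subseq_index_ge k Hk n). lia.
Qed.

Lemma cv_norm_const {H : Hilbert} (l : H) : cv_norm (fun _ => l) l.
Proof. intros eps He. exists O. intros. rewrite hsub_diag, hnorm_zero. auto. Qed.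

Lemma cv_norm_cv_weak {H : Hilbert} (u : nat -> H) (l : H) : cv_norm u l -> cv_weak u l.
Proof.
  intros Hu w eps He.
  assert (Hw := hnorm_nonneg w).
  destruct (Hu (eps / (hnorm w + 1))) as [N HN]; [apply Rdiv_lt_0_compat; lra|].
  exists N. intros n Hn. unfold R_dist.
  replace (hinner (u n) w - hinner l w) with (hinner (hsub (u n) l) w) by (hexpand; ring).
  eapply Rle_lt_trans; [apply cauchy_schwarz|].
  specialize (HN n Hn). assert (Hs := hnorm_nonneg (hsub (u n) l)).
  assert (hnorm (hsub (u n) l) * (hnorm w + 1) < eps) by (apply Rlt_mul_of_lt_div; lra).
  nra.
Qed.

Lemma bounded_Un_cv_subseq (u : nat -> R) (B : R) : (forall n, Rabs (u n) <= B) ->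
  exists k, subseq_index k /\ exists l, Un_cv (fun i => u (k i)) l.
Proof.
  intros Hb.
  destruct (Rtopology.Bolzano_Weierstrass u (fun x => - B <= x <= B)
              (Rtopology.compact_P3 (- B) B)) as [l Hl].
  { intros n. specialize (Hb n). assert (A := Rle_abs (u n)).
    assert (A' := Rle_abs (- u n)). rewrite Rabs_Ropp in A'. lra. }
  destruct (subseq_index_selection (fun i n => Rabs (u n - l) < / (INR i + 1))) as [k [Hk Hkl]].
  { intros i N.
    assert (Hp : 0 < / (INR i + 1)) by (apply Rinv_0_lt_compat; generalize (pos_INR i); lra).
    destruct (Hl (Rtopology.disc l (mkposreal _ Hp)) N) as [p [Hp1 Hp2]].
    { exists (mkposreal _ Hp). intros x Hx. exact Hx. }
    exists p. auto. }
  exists k. split; auto. exists l. intros eps He.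
  destruct (Rinv_INR_S_eventually_lt eps He) as [N HN]. exists N. intros n Hn.
  specialize (Hkl n). specialize (HN n Hn). unfold R_dist. lra.
Qed.

Section Diagonal.
Variables (a : nat -> nat -> R) (B : R).
Hypothesis Hb : forall m n, Rabs (a m n) <= B.

Definition cv_subseq (u : nat -> R) (Hu : forall n, Rabs (u n) <= B) : nat -> nat :=
  proj1_sig (constructive_indefinite_description _ (bounded_Un_cv_subseq u B Hu)).

Lemma cv_subseq_spec u Hu :
  subseq_index (cv_subseq u Hu) /\ exists l, Un_cv (fun i => u (cv_subseq u Hu i)) l.
Proof. unfold cv_subseq. destruct (constructive_indefinite_description _ _). auto. Qed.

(* Along [nested m] the rows [a 0, ..., a m] all converge. *)
Fixpoint nested (m : nat) : nat -> nat :=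
  match m with
  | O => cv_subseq (a O) (Hb O)
  | S m' => fun i => nested m' (cv_subseq (fun j => a (S m') (nested m' j))
                                          (fun j => Hb (S m') (nested m' j)) i)
  end.

Lemma nested_spec m : subseq_index (nested m) /\ exists l, Un_cv (fun i => a m (nested m i)) l.
Proof.
  induction m as [|m [Hinc _]]; [apply cv_subseq_spec|].
  destruct (cv_subseq_spec (fun j => a (S m) (nested m j)) (fun j => Hb (S m) (nested m j)))
    as [He [l Hl]].
  split; [|exists l; exact Hl].
  intros i. simpl. apply (subseq_index_lt _ Hinc), He.
Qed.

Lemma nested_refines m j :
  exists r, subseq_index r /\ forall i, nested (j + m) i = nested m (r i).
Proof.
  induction j as [|j [r [Hr Er]]]; [exists (fun i => i); split; [intros i; lia | auto]|].
  set (c := cv_subseq (fun k => a (S (j + m)) (nested (j + m) k))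
              (fun k => Hb (S (j + m)) (nested (j + m) k))).
  assert (Hc : subseq_index c) by apply cv_subseq_spec.
  exists (fun i => r (c i)). split; [|intros i; simpl; apply Er].
  intros i. apply (subseq_index_lt _ Hr), Hc.
Qed.

Definition diagonal (i : nat) : nat := nested i i.

Lemma diagonal_subseq_index : subseq_index diagonal.
Proof.
  intros i. unfold diagonal. simpl.
  destruct (nested_spec i) as [Hi _].
  destruct (cv_subseq_spec (fun j => a (S i) (nested i j)) (fun j => Hb (S i) (nested i j)))
    as [He _].
  apply subseq_index_lt; auto. assert (Hg := subseq_index_ge _ He (S i)). lia.
Qed.

Lemma diagonal_cv m : exists l, Un_cv (fun i => a m (diagonal i)) l.
Proof.
  destruct (nested_spec m) as [_ [l Hl]]. exists l.
  intros eps He. destruct (Hl eps He) as [N HN]. exists (max N m). intros i Hi.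
  destruct (nested_refines m (i - m)) as [r [Hr Er]].
  unfold diagonal. replace (nested i i) with (nested ((i - m) + m) i) by (f_equal; lia).
  rewrite Er. apply HN. assert (Hg := subseq_index_ge r Hr i). lia.
Qed.

End Diagonal.

Lemma Un_cv_Rinv_INR_S : Un_cv (fun n => / (INR n + 1)) 0.
Proof.
  intros eps He. destruct (Rinv_INR_S_eventually_lt eps He) as [N HN]. exists N.
  intros n Hn. specialize (HN n Hn). unfold R_dist. rewrite Rminus_0_r, Rabs_right; [lra|].
  apply Rle_ge, Rlt_le, Rinv_0_lt_compat. generalize (pos_INR n). lra.
Qed.

Lemma Un_cv_Rabs_le (u : nat -> R) l K : Un_cv u l -> (forall n, Rabs (u n) <= K) -> Rabs l <= K.
Proof. intros Hu Hk. exact (Rle_cv_lim Hk (cv_cvabs _ _ Hu) (Un_cv_const K)). Qed.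

Lemma linear_le_quadratic_eq0 (g q : R) : 0 <= q -> (forall s, - (s ^ 2 * q) <= s * g) -> g = 0.
Proof.
  intros Hq Hs. specialize (Hs (- g / (q + 1))).
  assert (E1 : (- g / (q + 1)) ^ 2 * q = g ^ 2 * q / (q + 1) ^ 2) by (field; lra).
  assert (E2 : - g / (q + 1) * g = - (g ^ 2 * (q + 1)) / (q + 1) ^ 2) by (field; lra).
  rewrite E1, E2 in Hs. unfold Rdiv in Hs.
  assert (Hp : 0 < / (q + 1) ^ 2) by (apply Rinv_0_lt_compat; nra).
  assert (g ^ 2 <= 0) by nra. nra.
Qed.

Lemma no_linear_bound_of_sq (e K : R) : 0 < e -> ~ (forall m : nat, (INR m * e) ^ 2 <= INR m * K).
Proof.
  intros He Hall.
  destruct (INR_unbounded (Rabs K / e ^ 2)) as [m Hm]. specialize (Hall m).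
  assert (Hm0 : 0 < INR m) by (assert (0 <= Rabs K / e ^ 2) by
      (apply Rmult_le_pos; [apply Rabs_pos | apply Rlt_le, Rinv_0_lt_compat; nra]); lra).
  assert (INR m * e ^ 2 <= K) by (apply (Rmult_le_reg_l (INR m)); nra).
  assert (Rabs K < INR m * e ^ 2).
  { apply (Rmult_lt_compat_r (e ^ 2)) in Hm; [|nra].
    unfold Rdiv in Hm. rewrite Rmult_assoc, Rinv_l in Hm by nra. lra. }
  assert (A := Rle_abs K). lra.
Qed.

(* The weak limit of a bounded sequence along which all [<Y i, Y j>] converge is
   obtained as the minimizer of the limit energy [||x||^2 - 2 lim <Y i, x>]. *)
Section WeakLimit.
Context {H : Hilbert} (Y : nat -> H) (B : R) (HB : forall i, hnorm (Y i) <= B)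
  (HY : forall j, exists l, Un_cv (fun i => hinner (Y i) (Y j)) l).

Lemma Un_cv_inner_add x y L1 L2 :
  Un_cv (fun i => hinner (Y i) x) L1 -> Un_cv (fun i => hinner (Y i) y) L2 ->
  Un_cv (fun i => hinner (Y i) (hadd x y)) (L1 + L2).
Proof.
  intros H1 H2. eapply Un_cv_ext; [|apply (CV_plus _ _ _ _ H1 H2)].
  intros n. simpl. hexpand. ring.
Qed.

Lemma Un_cv_inner_scal x L a : Un_cv (fun i => hinner (Y i) x) L ->
  Un_cv (fun i => hinner (Y i) (hscal a x)) (a * L).
Proof.
  intros H1. eapply Un_cv_ext; [|apply (Un_cv_scal _ a _ H1)]. intros n. simpl. hexpand. ring.
Qed.

Lemma Un_cv_inner_zero : Un_cv (fun i => hinner (Y i) hzero) 0.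
Proof. eapply Un_cv_ext; [|apply Un_cv_const]. intros n. simpl. rewrite hinner_0_r. auto. Qed.

Lemma bound_nonneg : 0 <= B.
Proof. eapply Rle_trans; [apply (hnorm_nonneg (Y O)) | apply (HB O)]. Qed.

Lemma lim_inner_bound x L : Un_cv (fun i => hinner (Y i) x) L -> Rabs L <= B * hnorm x.
Proof.
  intros H1. apply (Un_cv_Rabs_le _ _ _ H1). intros n.
  eapply Rle_trans; [apply cauchy_schwarz|].
  apply Rmult_le_compat_r; [apply hnorm_nonneg | apply HB].
Qed.

Definition energy (x : H) (v : R) : Prop :=
  exists L, Un_cv (fun i => hinner (Y i) x) L /\ v = hinner x x - 2 * L.

Lemma energy_lower_bound x v : energy x v -> - B ^ 2 <= v.
Proof.
  intros [L [HL ->]]. assert (Hb := lim_inner_bound x L HL). assert (Ha := Rle_abs L).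
  rewrite <- hnorm_sq. assert (Hn := hnorm_nonneg x). assert (HB0 := bound_nonneg).
  assert (Hsq := pow2_ge_0 (hnorm x - B)). nra.
Qed.

Definition neg_energies (r : R) : Prop := exists x v, energy x v /\ r = - v.

Lemma neg_energies_bound : bound neg_energies.
Proof. exists (B ^ 2). intros r [x [v [Hv ->]]]. apply energy_lower_bound in Hv. lra. Qed.

Lemma neg_energies_inhabited : exists r, neg_energies r.
Proof.
  exists 0, hzero, 0. split; [|ring]. exists 0.
  split; [apply Un_cv_inner_zero | rewrite hinner_0_l; ring].
Qed.

Definition energy_inf : R :=
  - proj1_sig (completeness neg_energies neg_energies_bound neg_energies_inhabited).

Lemma energy_inf_spec : is_lub neg_energies (- energy_inf).
Proof. unfold energy_inf. rewrite Ropp_involutive. destruct (completeness _ _ _). auto. Qed.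

Lemma energy_inf_le x v : energy x v -> energy_inf <= v.
Proof.
  intros Hv. destruct energy_inf_spec as [Hub _].
  assert (Hr := Hub (- v) (ex_intro _ x (ex_intro _ v (conj Hv eq_refl)))). lra.
Qed.

Lemma energy_inf_approx eta : 0 < eta ->
  exists x L, Un_cv (fun i => hinner (Y i) x) L /\ hinner x x - 2 * L < energy_inf + eta.
Proof.
  intros He. apply NNPP. intros Hn. destruct energy_inf_spec as [_ Hl].
  assert (- energy_inf <= - energy_inf - eta); [|lra].
  apply Hl. intros r [x [v [[L [HL ->]] ->]]].
  apply Rnot_lt_le. intros Hlt. apply Hn. exists x, L. split; [auto | lra].
Qed.

Lemma minimizing_pair_exists (k : nat) : exists p : H * R,
  Un_cv (fun i => hinner (Y i) (fst p)) (snd p) /\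
  hinner (fst p) (fst p) - 2 * snd p < energy_inf + / (INR k + 1).
Proof.
  destruct (energy_inf_approx (/ (INR k + 1))) as [x [L HxL]].
  - apply Rinv_0_lt_compat. generalize (pos_INR k). lra.
  - exists (x, L). exact HxL.
Qed.

Definition minimizing_pair (k : nat) : H * R :=
  proj1_sig (constructive_indefinite_description _ (minimizing_pair_exists k)).

Definition minimizing k := fst (minimizing_pair k).
Definition minimizing_lim k := snd (minimizing_pair k).

Lemma minimizing_spec k : Un_cv (fun i => hinner (Y i) (minimizing k)) (minimizing_lim k) /\
  hinner (minimizing k) (minimizing k) - 2 * minimizing_lim k < energy_inf + / (INR k + 1).
Proof.
  unfold minimizing, minimizing_lim, minimizing_pair.
  destruct (constructive_indefinite_description _ _). auto.
Qed.


Lemma energy_parallelogram (a b : H) La Lb :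
  Un_cv (fun i => hinner (Y i) a) La -> Un_cv (fun i => hinner (Y i) b) Lb ->
  hinner (hsub a b) (hsub a b) <=
    2 * (hinner a a - 2 * La - energy_inf) + 2 * (hinner b b - 2 * Lb - energy_inf).
Proof.
  intros Ha Hb.
  assert (Hm : energy (hscal (1 / 2) (hadd a b))
     (hinner (hscal (1 / 2) (hadd a b)) (hscal (1 / 2) (hadd a b)) - 2 * (1 / 2 * (La + Lb))))
    by (eexists; split; [apply Un_cv_inner_scal, Un_cv_inner_add; eauto | reflexivity]).
  apply energy_inf_le in Hm. hexpand. hexpand_in Hm. rewrite (hinner_sym b a) in *. nra.
Qed.

Lemma minimizing_cauchy : forall eps, 0 < eps -> exists N, forall m n,
  (N <= m)%nat -> (N <= n)%nat ->
  sqrt (hinner (hadd (minimizing m) (hopp (minimizing n)))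
               (hadd (minimizing m) (hopp (minimizing n)))) < eps.
Proof.
  intros eps He. destruct (Rinv_INR_S_eventually_lt (eps ^ 2 / 8)) as [N HN];
    [apply Rdiv_lt_0_compat; nra|].
  exists N. intros m n Hm Hn.
  destruct (minimizing_spec m) as [C1 J1]. destruct (minimizing_spec n) as [C2 J2].
  assert (P := energy_parallelogram _ _ _ _ C1 C2).
  assert (Q1 := HN m Hm). assert (Q2 := HN n Hn).
  change (hnorm (hsub (minimizing m) (minimizing n)) < eps).
  assert (0 < eps ^ 2) by nra.
  apply hnorm_lt_of_sq; lra.
Qed.

Definition weak_limit : H :=
  proj1_sig (constructive_indefinite_description _ (hcomplete minimizing minimizing_cauchy)).

Lemma minimizing_cv : cv_norm minimizing weak_limit.
Proof.
  unfold weak_limit. destruct (constructive_indefinite_description _ _) as [l Hl]. exact Hl.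
Qed.

(* Minimality of the energy in the direction [w] at [weak_limit]: its first variation
   [2 (<weak_limit, w> - lim <Y i, w>)] must vanish. *)
Lemma lim_inner_weak_limit w Lw : Un_cv (fun i => hinner (Y i) w) Lw -> Lw = hinner weak_limit w.
Proof.
  intros Hw.
  assert (Hk : forall s k, - / (INR k + 1) - s ^ 2 * hinner w w
                           <= 2 * s * (hinner (minimizing k) w - Lw)).
  { intros s k. destruct (minimizing_spec k) as [Ck Jk].
    assert (Hj : energy (hadd (minimizing k) (hscal s w))
       (hinner (hadd (minimizing k) (hscal s w)) (hadd (minimizing k) (hscal s w))
        - 2 * (minimizing_lim k + s * Lw)))
      by (eexists; split; [apply Un_cv_inner_add; [apply Ck | apply Un_cv_inner_scal, Hw]
                          | reflexivity]).
    apply energy_inf_le in Hj. hexpand_in Hj. rewrite (hinner_sym w (minimizing k)) in Hj.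
    nra. }
  assert (Hs : forall s, - (s ^ 2 * hinner w w) <= s * (2 * (hinner weak_limit w - Lw))).
  { intros s. replace (- (s ^ 2 * hinner w w)) with (- 0 - s ^ 2 * hinner w w) by ring.
    replace (s * (2 * (hinner weak_limit w - Lw)))
      with (2 * s * (hinner weak_limit w - Lw)) by ring.
    apply (Rle_cv_lim (Hk s)).
    - apply (CV_minus _ (fun _ => s ^ 2 * hinner w w)); [|apply Un_cv_const].
      apply (CV_opp _ _ Un_cv_Rinv_INR_S).
    - apply (Un_cv_scal _ (2 * s)), (CV_minus _ (fun _ => Lw)); [|apply Un_cv_const].
      apply (cv_norm_cv_weak _ _ minimizing_cv w). }
  assert (E := linear_le_quadratic_eq0 _ _ (hinner_pos w) Hs). lra.
Qed.

Lemma Un_cv_inner_of_approx (x : nat -> H) (z v : H) :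
  (forall k, Un_cv (fun i => hinner (Y i) (x k)) (hinner z (x k))) -> cv_norm x v ->
  Un_cv (fun i => hinner (Y i) v) (hinner z v).
Proof.
  intros Hx Hv eps He.
  assert (Hz := hnorm_nonneg z). assert (HB0 := bound_nonneg).
  set (C := 2 * (B + hnorm z + 1)).
  destruct (Hv (eps / C)) as [K HK]; [unfold C; apply Rdiv_lt_0_compat; lra|].
  specialize (HK K (le_n _)).
  destruct (Hx K (eps / 2) ltac:(lra)) as [N HN]. exists N. intros i Hi. specialize (HN i Hi).
  unfold R_dist in *.
  replace (hinner (Y i) v - hinner z v) with
    (hinner (Y i) (hsub v (x K)) + (hinner (Y i) (x K) - hinner z (x K))
     + hinner z (hsub (x K) v)) by (hexpand; ring).
  assert (Hd : hnorm (hsub (x K) v) * C < eps)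
    by (apply Rlt_mul_of_lt_div; [unfold C; lra | exact HK]).
  assert (C1 := cauchy_schwarz (Y i) (hsub v (x K))). rewrite hnorm_sub_sym in C1.
  assert (C2 := cauchy_schwarz z (hsub (x K) v)).
  assert (Hn := hnorm_nonneg (hsub (x K) v)). assert (HYi := HB i).
  assert (HYn := hnorm_nonneg (Y i)).
  assert (hnorm (Y i) * hnorm (hsub (x K) v) <= B * hnorm (hsub (x K) v)) by nra.
  assert (T := Rabs_triang (hinner (Y i) (hsub v (x K)))
                           (hinner (Y i) (x K) - hinner z (x K))).
  eapply Rle_lt_trans; [apply Rabs_triang|]. unfold C in Hd. nra.
Qed.

Lemma lim_inner_weak_limit_self :
  Un_cv (fun i => hinner (Y i) weak_limit) (hinner weak_limit weak_limit).
Proof.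
  apply (Un_cv_inner_of_approx minimizing); [|exact minimizing_cv].
  intros k. destruct (minimizing_spec k) as [Ck _].
  rewrite <- (lim_inner_weak_limit _ _ Ck). exact Ck.
Qed.

(* Adding terms [Y i - weak_limit] with [i] so large that each is almost orthogonal
   to the current sum [S] keeps [||S||^2] linear in the number [m] of terms. *)
Lemma frequently_far_sums w eps :
  (forall N, exists i, (N <= i)%nat /\ eps <= hinner (hsub (Y i) weak_limit) w) ->
  forall m, exists S, (exists L, Un_cv (fun i => hinner (Y i) S) L) /\
    hinner S S <= INR m * ((B + hnorm weak_limit) ^ 2 + 2) /\ INR m * eps <= hinner S w.
Proof.
  intros Hfar.
  assert (Hdiff : forall i, hinner (hsub (Y i) weak_limit) (hsub (Y i) weak_limit)
                            <= (B + hnorm weak_limit) ^ 2).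
  { intros i. rewrite <- hnorm_sq. assert (T := hnorm_triangle (Y i) (hopp weak_limit)).
    rewrite hnorm_opp in T. fold (hsub (Y i) weak_limit) in T. assert (HBi := HB i).
    assert (Hn := hnorm_nonneg (hsub (Y i) weak_limit)). nra. }
  induction m as [|m [S [[L HL] [H1 H2]]]].
  - exists hzero. split; [exists 0; apply Un_cv_inner_zero|].
    rewrite !hinner_0_l. simpl. split; lra.
  - rewrite (lim_inner_weak_limit _ _ HL) in HL.
    destruct (HL 1 ltac:(lra)) as [N HN]. destruct (Hfar N) as [i [Hi1 Hi2]].
    specialize (HN i Hi1). unfold R_dist in HN.
    exists (hadd S (hsub (Y i) weak_limit)). split.
    { destruct (HY i) as [Li HLi]. eexists. apply Un_cv_inner_add; [apply HL|].
      unfold hsub. apply Un_cv_inner_add; [apply HLi|].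
      rewrite hopp_scal. apply Un_cv_inner_scal, lim_inner_weak_limit_self. }
    assert (Hc : hinner S (hsub (Y i) weak_limit) < 1).
    { replace (hinner S (hsub (Y i) weak_limit))
        with (hinner (Y i) S - hinner weak_limit S)
        by (hexpand; rewrite (hinner_sym S (Y i)), (hinner_sym S weak_limit); ring).
      assert (Ha := Rle_abs (hinner (Y i) S - hinner weak_limit S)). lra. }
    specialize (Hdiff i). rewrite S_INR. split.
    + rewrite hinner_add_l, !hinner_add_r, (hinner_sym (hsub (Y i) weak_limit) S). nra.
    + rewrite hinner_add_l. nra.
Qed.

Lemma not_frequently_far w eps : 0 < eps ->
  ~ (forall N, exists i, (N <= i)%nat /\ eps <= hinner (hsub (Y i) weak_limit) w).
Proof.
  intros He Hfar.
  apply (no_linear_bound_of_sq eps (((B + hnorm weak_limit) ^ 2 + 2) * hinner w w) He).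
  intros m. destruct (frequently_far_sums w eps Hfar m) as [S [_ [H1 H2]]].
  assert (C := cauchy_schwarz_sq S w). assert (Hw := hinner_pos w).
  assert (0 <= INR m * eps) by (apply Rmult_le_pos; [apply pos_INR | lra]).
  assert ((INR m * eps) ^ 2 <= hinner S w ^ 2) by nra.
  assert (hinner S S * hinner w w <= INR m * ((B + hnorm weak_limit) ^ 2 + 2) * hinner w w)
    by nra.
  nra.
Qed.

Lemma weak_limit_cv_weak : cv_weak Y weak_limit.
Proof.
  intros w eps He. apply NNPP. intros Hno.
  assert (Hoff : forall N, exists n, (N <= n)%nat /\
                   eps <= Rabs (hinner (hsub (Y n) weak_limit) w)).
  { intros N. destruct (eventually_not_frequently _ Hno N) as [n [Hn Hnot]].
    exists n. split; auto. unfold R_dist in Hnot.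
    replace (hinner (hsub (Y n) weak_limit) w) with (hinner (Y n) w - hinner weak_limit w)
      by (hexpand; ring). lra. }
  destruct (classic (forall N, exists i, (N <= i)%nat /\
                       eps <= hinner (hsub (Y i) weak_limit) w)) as [P|P].
  - exact (not_frequently_far w eps He P).
  - apply (not_frequently_far (hopp w) eps He). intros N.
    apply not_all_ex_not in P as [N0 HN0].
    destruct (Hoff (max N N0)) as [n [Hn Hfar]]. exists n. split; [lia|].
    assert (hinner (hsub (Y n) weak_limit) w < eps)
      by (apply Rnot_le_lt; intros Hle; apply HN0; exists n; split; [lia | exact Hle]).
    rewrite hopp_scal, hinner_scal_r.
    destruct (Rcase_abs (hinner (hsub (Y n) weak_limit) w)) as [Hneg|Hpos];
      [rewrite Rabs_left in Hfar | rewrite Rabs_right in Hfar]; lra.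
Qed.

End WeakLimit.

Lemma bounded_weak_subseq {H : Hilbert} (y : nat -> H) (B : R) : (forall n, hnorm (y n) <= B) ->
  exists k z, subseq_index k /\ cv_weak (fun i => y (k i)) z.
Proof.
  intros HB.
  set (a := fun m n => hinner (y n) (y m)).
  assert (Ha : forall m n, Rabs (a m n) <= B * B).
  { intros m n. eapply Rle_trans; [apply cauchy_schwarz|].
    apply Rmult_le_compat; auto; apply hnorm_nonneg. }
  set (k := diagonal a (B * B) Ha).
  exists k, (weak_limit (fun i => y (k i)) B (fun i => HB (k i))).
  split; [apply diagonal_subseq_index|].
  apply weak_limit_cv_weak. intros j. apply (diagonal_cv a (B * B) Ha (k j)).
Qed.

Lemma half_pow_pos j : 0 < (1 / 2) ^ j.
Proof. apply pow_lt. lra. Qed.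

(* Borwein-Preiss: starting from [y0], let [center (i+1)] nearly minimize
   [penalized (i+1) = F + weight * sum_(j <= i) 2^-j ||. - center j||^2] on the
   sublevel set of [center i].  These sublevel sets are nested with radii
   [radius_at i -> 0], so the centers converge to a point at which the limit
   penalized function is minimal; this yields a proximal subgradient there. *)
Section ProximalDensity.
Context {H : Hilbert} (f : H -> ereal) (F : H -> R) (EF : forall y, f y = Fin (F y))
  (Hlsc : lsc f) (y0 : H) (rho m : R) (Hrho : 0 < rho)
  (Hm : forall x, hnorm (hsub x y0) <= rho -> m <= F x).

Definition in_ball (x : H) : Prop := hnorm (hsub x y0) <= rho.
Definition radius : R := rho / 2.
Definition gap0 : R := F y0 - m + 1.
(* Chosen so that the first sublevel set lies in the ball of radius [radius]. *)
Definition weight : R := gap0 / radius ^ 2.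
Definition wt (j : nat) : R := (1 / 2) ^ j.
Definition radius_at (i : nat) : R := radius * (1 / 2) ^ i.
Definition slack (i : nat) : R := weight * wt (S i) * radius_at (S i) ^ 2.

Lemma in_ball_y0 : in_ball y0.
Proof. unfold in_ball. rewrite hsub_diag, hnorm_zero. lra. Qed.

Lemma gap0_ge1 : 1 <= gap0.
Proof. unfold gap0. assert (Hy := Hm y0 in_ball_y0). lra. Qed.

Lemma radius_pos : 0 < radius.
Proof. unfold radius. lra. Qed.

Lemma weight_pos : 0 < weight.
Proof.
  unfold weight. assert (H1 := gap0_ge1). assert (H2 := radius_pos).
  apply Rdiv_lt_0_compat; nra.
Qed.

Lemma wt_pos j : 0 < wt j.
Proof. apply half_pow_pos. Qed.

Lemma radius_at_pos i : 0 < radius_at i.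
Proof. unfold radius_at. assert (H1 := radius_pos). assert (H2 := half_pow_pos i). nra. Qed.

Lemma radius_at_S_le i : radius_at (S i) <= radius_at i.
Proof. unfold radius_at. simpl. assert (H1 := radius_pos). assert (H2 := half_pow_pos i). nra. Qed.

Lemma slack_pos i : 0 < slack i.
Proof.
  unfold slack. assert (H1 := weight_pos). assert (H2 := wt_pos (S i)).
  assert (H3 := radius_at_pos (S i)).
  apply Rmult_lt_0_compat; [nra | apply pow_lt; lra].
Qed.

Lemma radius_at_small eps : 0 < eps -> exists i, radius_at i < eps.
Proof.
  intros He. assert (Hl := radius_pos).
  destruct (pow_lt_1_zero (1 / 2) ltac:(rewrite Rabs_right; lra) (eps / radius)) as [N HN];
    [apply Rdiv_lt_0_compat; lra|].
  exists N. specialize (HN N (le_n _)).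
  rewrite Rabs_right in HN by (apply Rle_ge, Rlt_le, half_pow_pos).
  unfold radius_at. rewrite Rmult_comm. apply Rlt_mul_of_lt_div; [lra | exact HN].
Qed.

Definition near_minimizer (G : H -> R) (x : H) (et : R) (y : H) : Prop :=
  in_ball y /\ G y <= G x /\ forall z, in_ball z -> G z <= G x -> G y <= G z + et.

Lemma near_minimizer_exists (G : H -> R) (x : H) (et : R) : in_ball x ->
  (forall z, in_ball z -> m <= G z) -> 0 < et -> exists y, near_minimizer G x et y.
Proof.
  intros Hx Hlb Het. apply NNPP. intros Hn.
  assert (Step : forall y, in_ball y -> G y <= G x ->
                   exists z, in_ball z /\ G z <= G x /\ G z < G y - et).
  { intros y Hy Hyx. apply NNPP. intros Hc. apply Hn. exists y. split; [auto | split; auto].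
    intros z Hz Hzx. apply Rnot_lt_le. intros Hlt. apply Hc. exists z. split; auto. lra. }
  assert (Iter : forall k : nat, exists z, in_ball z /\ G z <= G x - INR k * et).
  { induction k as [|k [z [Hz Hzk]]]; [exists x; simpl; split; [auto | lra]|].
    assert (0 <= INR k * et) by (apply Rmult_le_pos; [apply pos_INR | lra]).
    destruct (Step z Hz ltac:(lra)) as [z' [Hz' [_ Hlt]]].
    exists z'. split; auto. rewrite S_INR. lra. }
  destruct (INR_unbounded ((G x - m) / et)) as [k Hk].
  destruct (Iter k) as [z [Hz Hzk]]. assert (Hlbz := Hlb z Hz).
  assert (G x - m < INR k * et).
  { apply (Rmult_lt_compat_r et) in Hk; [|lra].
    unfold Rdiv in Hk. rewrite Rmult_assoc, Rinv_l in Hk by lra. lra. }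
  lra.
Qed.

Definition pick_near (G : H -> R) (x : H) (et : R) : H :=
  match excluded_middle_informative (exists y, near_minimizer G x et y) with
  | left h => proj1_sig (constructive_indefinite_description _ h)
  | right _ => x
  end.

Lemma pick_near_spec G x et : in_ball x -> (forall z, in_ball z -> m <= G z) -> 0 < et ->
  near_minimizer G x et (pick_near G x et).
Proof.
  intros Hx Hlb Het. unfold pick_near. destruct (excluded_middle_informative _) as [h|h].
  - destruct (constructive_indefinite_description _ h). auto.
  - exfalso. apply h, near_minimizer_exists; auto.
Qed.

Fixpoint iterate (i : nat) : H * (H -> R) :=
  match i with
  | O => (y0, F)
  | S i' => let (x, G) := iterate i' in
            let G' := fun z => G z + weight * wt i' * hinner (hsub z x) (hsub z x) in
            (pick_near G' x (slack i'), G')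
  end.

Definition center (i : nat) : H := fst (iterate i).
Definition penalized (i : nat) : H -> R := snd (iterate i).

Lemma penalized_S i z : penalized (S i) z
  = penalized i z + weight * wt i * hinner (hsub z (center i)) (hsub z (center i)).
Proof. unfold penalized, center. simpl. destruct (iterate i). reflexivity. Qed.

Lemma center_S i : center (S i) = pick_near (penalized (S i)) (center i) (slack i).
Proof.
  assert (E := penalized_S i). unfold penalized, center in *. simpl in *.
  destruct (iterate i). reflexivity.
Qed.

Lemma penalized_le_S i z : penalized i z <= penalized (S i) z.
Proof.
  rewrite penalized_S. assert (H1 := weight_pos). assert (H2 := wt_pos i).
  assert (H3 := hinner_pos (hsub z (center i))).
  assert (0 <= weight * wt i) by nra. nra.
Qed.

Lemma penalized_mono i j z : (i <= j)%nat -> penalized i z <= penalized j z.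
Proof.
  intros Hij. induction Hij; [lra|]. eapply Rle_trans; [apply IHHij | apply penalized_le_S].
Qed.

Lemma penalized_lb i z : in_ball z -> m <= penalized i z.
Proof.
  intros Hz. eapply Rle_trans; [apply Hm, Hz|].
  apply (penalized_mono O i z); lia.
Qed.

Lemma penalized_S_center i : penalized (S i) (center i) = penalized i (center i).
Proof. rewrite penalized_S, hsub_diag, hinner_0_l. ring. Qed.

Lemma center_near i :
  in_ball (center i) /\ near_minimizer (penalized (S i)) (center i) (slack i) (center (S i)).
Proof.
  assert (Hnear : forall i, in_ball (center i) ->
            near_minimizer (penalized (S i)) (center i) (slack i) (center (S i)))
    by (intros j Hj; rewrite center_S; apply pick_near_spec;
        [exact Hj | intros; apply penalized_lb; auto | apply slack_pos]).
  induction i as [|i [Hb _]]; [split; [apply in_ball_y0 | apply Hnear, in_ball_y0]|].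
  assert (Hb' : in_ball (center (S i))) by apply (Hnear i Hb).
  split; [exact Hb' | apply Hnear, Hb'].
Qed.

Lemma center_in_ball i : in_ball (center i).
Proof. apply center_near. Qed.

Definition sublevel (i : nat) (z : H) : Prop :=
  in_ball z /\ penalized (S i) z <= penalized (S i) (center i).

Lemma sublevel_S i z : sublevel (S i) z -> sublevel i z.
Proof.
  intros [Hb Hz]. split; auto.
  assert (A := penalized_le_S (S i) z). rewrite (penalized_S_center (S i)) in Hz.
  destruct (center_near i) as [_ [_ [H2 _]]]. lra.
Qed.

Lemma sublevel_le i j z : (i <= j)%nat -> sublevel j z -> sublevel i z.
Proof. intros Hij. induction Hij; auto. intros Hz. apply IHHij, sublevel_S, Hz. Qed.

Lemma sublevel_center i j : (i <= j)%nat -> sublevel i (center j).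
Proof.
  intros Hij. destruct (Nat.eq_dec i j) as [->|Hne]; [split; [apply center_in_ball | lra]|].
  destruct j as [|j]; [lia|]. apply (sublevel_le i j); [lia|].
  destruct (center_near j) as [_ [Hb [Hle _]]]. split; auto.
Qed.

Lemma sublevel_S_diam i z : sublevel (S i) z ->
  hnorm (hsub z (center (S i))) <= radius_at (S i).
Proof.
  intros Hz. destruct (sublevel_S _ _ Hz) as [_ Hz2]. destruct Hz as [Hb Hz].
  rewrite penalized_S, penalized_S_center in Hz.
  destruct (center_near i) as [_ [_ [_ Hmin]]]. specialize (Hmin z Hb Hz2).
  unfold slack in Hmin. assert (H1 := weight_pos). assert (H2 := wt_pos (S i)).
  apply hnorm_le_of_sq; [apply Rlt_le, radius_at_pos|].
  apply (Rmult_le_reg_l (weight * wt (S i))); nra.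
Qed.

Lemma center_cauchy : forall eps, 0 < eps -> exists N, forall m n,
  (N <= m)%nat -> (N <= n)%nat ->
  sqrt (hinner (hadd (center m) (hopp (center n))) (hadd (center m) (hopp (center n)))) < eps.
Proof.
  intros eps He. destruct (radius_at_small (eps / 2) ltac:(lra)) as [i Hi].
  assert (Hr := radius_at_S_le i).
  exists (S i). intros a b Ha Hb. change (hnorm (hsub (center a) (center b)) < eps).
  assert (Da := sublevel_S_diam i _ (sublevel_center (S i) a Ha)).
  assert (Db := sublevel_S_diam i _ (sublevel_center (S i) b Hb)).
  assert (T := hnorm_sub_triangle (center a) (center (S i)) (center b)).
  rewrite (hnorm_sub_sym (center (S i))) in T. lra.
Qed.

Definition limit_point : H :=
  proj1_sig (constructive_indefinite_description _ (hcomplete center center_cauchy)).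

Lemma center_cv : cv_norm center limit_point.
Proof. unfold limit_point. destruct (constructive_indefinite_description _ _). auto. Qed.

Lemma sublevel_O_near z : sublevel O z -> hnorm (hsub z y0) < radius.
Proof.
  intros [Hb Hz]. rewrite penalized_S_center, penalized_S in Hz.
  unfold penalized, center, wt in Hz. simpl in Hz.
  assert (Hmz := Hm z Hb). assert (HK := weight_pos). assert (Hl := radius_pos).
  assert (Hq : weight * hinner (hsub z y0) (hsub z y0) < gap0) by (unfold gap0; lra).
  assert (weight * radius ^ 2 = gap0) by (unfold weight; field; lra).
  apply hnorm_lt_of_sq; [exact Hl|]. apply (Rmult_lt_reg_l weight); lra.
Qed.

Lemma limit_point_near : hnorm (hsub limit_point y0) <= radius.
Proof.
  apply Rnot_lt_le. intros Hlt.
  destruct (center_cv (hnorm (hsub limit_point y0) - radius) ltac:(lra)) as [N HN].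
  specialize (HN N (le_n _)). assert (B := sublevel_O_near _ (sublevel_center O N ltac:(lia))).
  assert (T := hnorm_sub_triangle limit_point (center N) y0). rewrite hnorm_sub_sym in HN. lra.
Qed.

Lemma limit_point_in_ball : in_ball limit_point.
Proof. unfold in_ball. assert (V := limit_point_near). unfold radius in V. lra. Qed.

Fixpoint weight_sum (N : nat) : R :=
  match N with O => 0 | S N' => weight_sum N' + wt N' end.

Fixpoint shift_sum (N : nat) : H :=
  match N with
  | O => hzero
  | S N' => hadd (shift_sum N') (hscal (wt N') (hsub limit_point (center N')))
  end.

Lemma weight_sum_bound N : 0 <= weight_sum N <= 2.
Proof.
  assert (E : weight_sum N = 2 - 2 * (1 / 2) ^ N).
  { induction N as [|N IHN]; [simpl; lra|]. simpl weight_sum. rewrite IHN. unfold wt.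
    simpl pow. lra. }
  rewrite E. assert (H1 := half_pow_pos N).
  assert ((1 / 2) ^ N <= 1)
    by (apply Rle_trans with (1 ^ N); [apply pow_incr; lra | rewrite pow1; lra]).
  lra.
Qed.

Lemma penalized_diff N z : penalized N z - penalized N limit_point =
  F z - F limit_point + weight * weight_sum N * hinner (hsub z limit_point) (hsub z limit_point)
  + 2 * weight * hinner (hsub z limit_point) (shift_sum N).
Proof.
  induction N as [|N IHN].
  - unfold penalized. simpl. rewrite hinner_0_r. ring.
  - rewrite !penalized_S. simpl shift_sum. simpl weight_sum.
    transitivity (penalized N z - penalized N limit_point + weight * wt N *
      (hinner (hsub z (center N)) (hsub z (center N))
       - hinner (hsub limit_point (center N)) (hsub limit_point (center N)))); [ring|].
    rewrite IHN. hexpand.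
    rewrite ?(hinner_sym limit_point z), ?(hinner_sym (center N) z),
      ?(hinner_sym (center N) limit_point), ?(hinner_sym (shift_sum N) z),
      ?(hinner_sym (shift_sum N) limit_point).
    ring.
Qed.

(* By lower semicontinuity at [limit_point] and the identity above, a value of
   [penalized (S i)] at [limit_point] above the sublevel would persist at nearby
   centers, which lie in the sublevel. *)
Lemma sublevel_limit_point i : sublevel i limit_point.
Proof.
  split; [apply limit_point_in_ball|]. apply Rnot_lt_le. intros Hlt.
  set (gap := penalized (S i) limit_point - penalized (S i) (center i)).
  destruct (Hlsc limit_point (F limit_point - gap / 2)) as [d [Hd Hball]];
    [rewrite EF; simpl; unfold gap; lra|].
  set (Q := hnorm (shift_sum (S i))). assert (HQ : 0 <= Q) by apply hnorm_nonneg.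
  assert (HK := weight_pos).
  set (e := Rmin d (gap / (4 * weight * (Q + 1)))).
  assert (He : 0 < e)
    by (apply Rmin_glb_lt; auto; apply Rdiv_lt_0_compat; unfold gap; nra).
  destruct (center_cv e He) as [J HJ].
  set (j := max J i). specialize (HJ j ltac:(unfold j; lia)).
  destruct (sublevel_center i j ltac:(unfold j; lia)) as [_ Hmem].
  set (v := hsub (center j) limit_point) in *.
  assert (Hj1 : hnorm v < d) by (eapply Rlt_le_trans; [apply HJ | apply Rmin_l]).
  assert (Hj2 : hnorm v * (4 * weight * (Q + 1)) < gap).
  { apply Rlt_mul_of_lt_div; [nra|]. eapply Rlt_le_trans; [apply HJ | apply Rmin_r]. }
  specialize (Hball (center j) Hj1). rewrite EF in Hball. simpl in Hball.
  assert (Id := penalized_diff (S i) (center j)). fold v in Id.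
  assert (W := weight_sum_bound (S i)). assert (Hs := hinner_pos v).
  assert (C := cauchy_schwarz_ge v (shift_sum (S i))). fold Q in C.
  assert (Hn := hnorm_nonneg v).
  assert (0 <= weight * weight_sum (S i) * hinner v v)
    by (apply Rmult_le_pos; [nra | auto]).
  assert (2 * weight * (hnorm v * Q) <= gap / 2) by nra.
  unfold gap in *. nra.
Qed.

Lemma penalized_S_center_antitone i j : (i <= j)%nat ->
  penalized (S j) (center j) <= penalized (S i) (center i).
Proof.
  intros Hij. induction Hij; [lra|].
  eapply Rle_trans; [|apply IHHij]. rewrite penalized_S_center.
  destruct (center_near m0) as [_ [_ [H2 _]]]. lra.
Qed.

Lemma penalized_limit_point_min z : in_ball z ->
  exists N0, forall N, (N0 <= N)%nat -> penalized N limit_point <= penalized N z.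
Proof.
  intros Hz. destruct (classic (forall i, sublevel i z)) as [Hall|Hex].
  - (* [z] lies in all the shrinking sublevel sets, as does [limit_point] *)
    assert (E : z = limit_point).
    { apply hnorm_sub_diag_uniq, Rle_antisym; [|apply hnorm_nonneg].
      apply Rnot_lt_le. intros Hlt.
      destruct (radius_at_small (hnorm (hsub z limit_point) / 2) ltac:(lra)) as [i Hi].
      assert (D1 := sublevel_S_diam i z (Hall (S i))).
      assert (D2 := sublevel_S_diam i limit_point (sublevel_limit_point (S i))).
      assert (Hr := radius_at_S_le i).
      assert (T := hnorm_sub_triangle z (center (S i)) limit_point).
      rewrite (hnorm_sub_sym (center (S i)) limit_point) in T. lra. }
    subst. exists O. intros. lra.
  - apply not_all_ex_not in Hex. destruct Hex as [i Hi].
    assert (Hgt : penalized (S i) (center i) < penalized (S i) z)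
      by (apply Rnot_le_lt; intros Hle; apply Hi; split; auto).
    exists (S i). intros N HN. destruct N as [|j]; [lia|].
    assert (A1 := penalized_mono (S i) (S j) z HN).
    destruct (sublevel_limit_point j) as [_ A2].
    assert (A3 := penalized_S_center_antitone i j ltac:(lia)). lra.
Qed.

Lemma limit_point_center_dist j : hnorm (hsub limit_point (center j)) <= rho.
Proof.
  assert (A := limit_point_near). assert (B := sublevel_O_near _ (sublevel_center O j ltac:(lia))).
  assert (T := hnorm_sub_triangle limit_point y0 (center j)).
  rewrite (hnorm_sub_sym y0) in T. unfold radius in *. lra.
Qed.

Lemma shift_sum_tail N k : hnorm (hsub (shift_sum (k + N)) (shift_sum N))
  <= 2 * rho * ((1 / 2) ^ N - (1 / 2) ^ (k + N)).
Proof.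
  induction k as [|k IHk]; [simpl; rewrite hsub_diag, hnorm_zero; lra|].
  simpl plus. simpl shift_sum.
  set (v := hscal (wt (k + N)) (hsub limit_point (center (k + N)))).
  replace (hsub (hadd (shift_sum (k + N)) v) (shift_sum N))
    with (hadd (hsub (shift_sum (k + N)) (shift_sum N)) v)
    by (apply hsub_inner_diag_uniq; hexpand; ring).
  eapply Rle_trans; [apply hnorm_triangle|].
  unfold v. rewrite hnorm_scal, Rabs_right by (apply Rle_ge, Rlt_le, wt_pos).
  assert (V := limit_point_center_dist (k + N)). assert (Hw := wt_pos (k + N)). unfold wt in *.
  assert ((1 / 2) ^ (k + N) * hnorm (hsub limit_point (center (k + N)))
          <= (1 / 2) ^ (k + N) * rho) by (apply Rmult_le_compat_l; lra).
  simpl pow. lra.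
Qed.

Lemma shift_sum_cauchy : forall eps, 0 < eps -> exists N, forall m n,
  (N <= m)%nat -> (N <= n)%nat ->
  sqrt (hinner (hadd (shift_sum m) (hopp (shift_sum n)))
               (hadd (shift_sum m) (hopp (shift_sum n)))) < eps.
Proof.
  intros eps He.
  destruct (pow_lt_1_zero (1 / 2) ltac:(rewrite Rabs_right; lra) (eps / (4 * rho))) as [N HN];
    [apply Rdiv_lt_0_compat; lra|].
  exists N. intros a b Ha Hb. change (hnorm (hsub (shift_sum a) (shift_sum b)) < eps).
  specialize (HN N (le_n _)). rewrite Rabs_right in HN by (apply Rle_ge, Rlt_le, half_pow_pos).
  assert (Ta := shift_sum_tail N (a - N)). assert (Tb := shift_sum_tail N (b - N)).
  replace (a - N + N)%nat with a in Ta by lia. replace (b - N + N)%nat with b in Tb by lia.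
  assert (Pa := half_pow_pos a). assert (Pb := half_pow_pos b).
  assert (T := hnorm_sub_triangle (shift_sum a) (shift_sum N) (shift_sum b)).
  rewrite (hnorm_sub_sym (shift_sum N)) in T.
  assert ((1 / 2) ^ N * (4 * rho) < eps) by (apply Rlt_mul_of_lt_div; lra).
  nra.
Qed.

Definition shift_limit : H :=
  proj1_sig (constructive_indefinite_description _ (hcomplete shift_sum shift_sum_cauchy)).

Lemma shift_sum_cv : cv_norm shift_sum shift_limit.
Proof. unfold shift_limit. destruct (constructive_indefinite_description _ _). auto. Qed.

Lemma prox_subdiff_dense : exists v p, hnorm (hsub v y0) < rho /\ prox_subdiff f v p.
Proof.
  assert (V := limit_point_near). unfold radius in V. assert (HK := weight_pos).
  exists limit_point, (hscal (- 2 * weight) shift_limit). split; [lra|].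
  exists (F limit_point). split; [auto|].
  exists (4 * weight), (rho / 2). split; [lra | split; [lra|]].
  intros y Hy. rewrite EF. cbn [ele]. rewrite hinner_scal_l, hnorm_sq.
  assert (Hby : in_ball y)
    by (unfold in_ball; assert (T := hnorm_sub_triangle y limit_point y0); lra).
  destruct (penalized_limit_point_min y Hby) as [N0 HN0].
  set (v := hsub y limit_point) in *. assert (Hs := hinner_pos v).
  set (Ny := hnorm v). assert (Hny : 0 <= Ny) by apply hnorm_nonneg.
  assert (Key : forall eta, 0 < eta -> - 2 * weight * hinner shift_limit v
            - 2 * weight * hinner v v <= F y - F limit_point + 2 * weight * Ny * eta).
  { intros eta He. destruct (shift_sum_cv eta He) as [N1 HN1].
    set (N := max N0 N1). specialize (HN0 N ltac:(unfold N; lia)).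
    specialize (HN1 N ltac:(unfold N; lia)).
    assert (Id := penalized_diff N y). fold v in Id. assert (W := weight_sum_bound N).
    assert (weight * weight_sum N * hinner v v <= 2 * weight * hinner v v)
      by (assert (weight * hinner v v >= 0) by nra; nra).
    assert (C := cauchy_schwarz v (hsub (shift_sum N) shift_limit)). fold Ny in C.
    replace (hinner v (shift_sum N)) with
      (hinner shift_limit v + hinner v (hsub (shift_sum N) shift_limit)) in Id
      by (unfold v; hexpand;
          rewrite ?(hinner_sym shift_limit y), ?(hinner_sym shift_limit limit_point); ring).
    assert (A := Rle_abs (hinner v (hsub (shift_sum N) shift_limit))).
    assert (Ny * hnorm (hsub (shift_sum N) shift_limit) <= Ny * eta)
      by (apply Rmult_le_compat_l; lra).
    assert (2 * weight * hinner v (hsub (shift_sum N) shift_limit) <= 2 * weight * (Ny * eta))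
      by nra.
    lra. }
  assert (- 2 * weight * hinner shift_limit v - 2 * weight * hinner v v <= F y - F limit_point).
  { apply (Rle_of_le_add_small _ _ (2 * weight * Ny) 1); [lra | nra |].
    intros s Hs'. specialize (Key s ltac:(lra)). nra. }
  lra.
Qed.

End ProximalDensity.

Section SecondOrder.
Context {H : Hilbert} (f : H -> ereal) (xb : H) (c : R) (Hc : 0 < c)
  (Hconc : concave (shift_sq f c)) (fxb : R) (Efxb : f xb = Fin fxb)
  (H0 : prox_subdiff f xb hzero) (F : H -> R) (EF : forall y, f y = Fin (F y)).

Definition quot2 (t : R) (u : H) : R := (F (hadd xb (hscal t u)) - fxb) * (2 / t ^ 2).

Lemma Delta2_quot2 t u : 0 < t -> Delta2 f xb hzero t u = Fin (quot2 t u).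
Proof. intros Ht. unfold Delta2, quot2. rewrite Efxb, EF, hinner_0_l. f_equal. field. lra. Qed.

Lemma F_xb : F xb = fxb.
Proof. rewrite EF in Efxb. injection Efxb. auto. Qed.

Lemma F_majorant (x p : H) : prox_subdiff f x p -> forall y,
  F y <= F x + hinner p (hsub y x) + c * hnorm (hsub y x) ^ 2.
Proof.
  intros Hp y. destruct (prox_subdiff_majorant f c Hc Hconc x p (F x) (EF x) Hp y) as [fy [E Hle]].
  rewrite EF in E. injection E as ->. exact Hle.
Qed.

Lemma F_majorant_xb y : F y <= fxb + c * hnorm (hsub y xb) ^ 2.
Proof. assert (S := F_majorant xb hzero H0 y). rewrite hinner_0_l, F_xb in S. lra. Qed.

Lemma quot2_le t u : 0 < t -> quot2 t u <= 2 * c * hnorm u ^ 2.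
Proof.
  intros Ht. unfold quot2. assert (U := F_majorant_xb (hadd xb (hscal t u))).
  rewrite hsub_hadd_scal_l, hnorm_scal, Rabs_right in U by lra.
  assert (0 < 2 / t ^ 2) by (apply Rdiv_lt_0_compat; nra).
  apply Rle_trans with ((c * (t * hnorm u) ^ 2) * (2 / t ^ 2));
    [apply Rmult_le_compat_r; lra | right; field; lra].
Qed.

Lemma quot2_majorant t hs zs v : 0 < t ->
  prox_subdiff f (hadd xb (hscal t hs)) (hadd hzero (hscal t zs)) ->
  quot2 t v <= quot2 t hs + 2 * hinner zs (hsub v hs) + 2 * c * hnorm (hsub v hs) ^ 2.
Proof.
  intros Ht Hp. assert (S := F_majorant _ _ Hp (hadd xb (hscal t v))).
  rewrite hsub_hadd_scal, hadd_0_l, hnorm_scal, Rabs_right, hinner_scal_l, hinner_scal_r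
    in S by lra.
  unfold quot2.
  replace (2 * hinner zs (hsub v hs))
    with (2 / t ^ 2 * (t * (t * hinner zs (hsub v hs)))) by (field; lra).
  replace (2 * c * hnorm (hsub v hs) ^ 2)
    with (2 / t ^ 2 * (c * (t * hnorm (hsub v hs)) ^ 2)) by (field; lra).
  assert (0 < 2 / t ^ 2) by (apply Rdiv_lt_0_compat; nra).
  apply (Rmult_le_compat_r (2 / t ^ 2)) in S; lra.
Qed.

Lemma quot2_midpoint t a u : 0 < t ->
  quot2 t a <= 2 * quot2 t u - quot2 t (hsub (hscal 2 u) a) + 4 * c * hnorm (hsub a u) ^ 2.
Proof.
  intros Ht.
  set (M := hadd xb (hscal t u)). set (Y := hadd xb (hscal t (hsub (hscal 2 u) a))).
  assert (EA : hadd M (hscal (Ropp 1) (hsub Y M)) = hadd xb (hscal t a))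
    by (apply hsub_inner_diag_uniq; unfold M, Y; hexpand; ring).
  assert (EYM : hsub Y M = hscal t (hsub u a))
    by (apply hsub_inner_diag_uniq; unfold M, Y; hexpand; ring).
  assert (L := paraconcave_secant f c Hconc M Y 1 (F (hadd xb (hscal t a))) (F Y) (F M)
                 Rlt_0_1 (EF M)).
  rewrite EA, !EF in L. specialize (L (Rle_refl _) (Rle_refl _)).
  rewrite EYM, hnorm_scal, Rabs_right in L by lra. rewrite hnorm_sub_sym.
  unfold quot2. fold M Y.
  replace (4 * c * hnorm (hsub u a) ^ 2)
    with (2 / t ^ 2 * (2 * c * (t * hnorm (hsub u a)) ^ 2)) by (field; lra).
  assert (0 < 2 / t ^ 2) by (apply Rdiv_lt_0_compat; nra).
  apply (Rmult_le_compat_r (2 / t ^ 2)) in L; lra.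
Qed.

Lemma quot2_scale t s u : 0 < t -> 0 < s -> quot2 (s * t) u * s ^ 2 = quot2 t (hscal s u).
Proof.
  intros Ht Hs. unfold quot2. rewrite hscal_assoc. replace (t * s) with (s * t) by ring.
  field. lra.
Qed.


Lemma quot2_dilate_le t s a u zn : 0 < t -> 0 < s ->
  prox_subdiff f (hadd xb (hscal t a)) (hadd hzero (hscal t zn)) ->
  quot2 ((1 + s) * t) a * (1 + s) ^ 2 <=
    2 * quot2 t u - quot2 t (hsub (hscal 2 u) a) + 4 * c * hnorm (hsub a u) ^ 2
    + 2 * s * hinner zn a + 2 * c * s ^ 2 * hnorm a ^ 2.
Proof.
  intros Ht Hs Hp. rewrite quot2_scale by lra.
  assert (M := quot2_majorant t a zn (hscal (1 + s) a) Ht Hp).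
  replace (hsub (hscal (1 + s) a) a) with (hscal s a) in M
    by (apply hsub_inner_diag_uniq; hexpand; ring).
  rewrite hinner_scal_r, hnorm_scal, Rabs_right in M by lra.
  assert (Mid := quot2_midpoint t a u Ht). nra.
Qed.

Section QuadraticGrowth.
Context (b0 d0 : R) (Hb0 : 0 < b0) (Hd0 : 0 < d0)
  (Hmin : forall x, hnorm (hsub x xb) < d0 -> fxb + b0 / 2 * hnorm (hsub x xb) ^ 2 <= F x).

Lemma quot2_ge t u : 0 < t -> t * hnorm u < d0 -> b0 * hnorm u ^ 2 <= quot2 t u.
Proof.
  intros Ht Hu. unfold quot2. assert (L := Hmin (hadd xb (hscal t u))).
  rewrite hsub_hadd_scal_l, hnorm_scal, Rabs_right in L by lra. specialize (L Hu).
  assert (0 < 2 / t ^ 2) by (apply Rdiv_lt_0_compat; nra).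
  apply Rle_trans with ((b0 / 2 * (t * hnorm u) ^ 2) * (2 / t ^ 2));
    [right; field; lra | apply Rmult_le_compat_r; lra].
Qed.

Lemma soc_first_kind_of_growth : soc_first_kind f xb.
Proof.
  exists b0. split; auto. intros h Hh eps He.
  set (dl := Rmin 1 (Rmin (eps / (2 * b0)) (d0 / 3))).
  assert (Hdl1 : dl <= 1) by apply Rmin_l.
  assert (Hdl2 : dl <= eps / (2 * b0)) by (eapply Rle_trans; [apply Rmin_r | apply Rmin_l]).
  assert (Hdl3 : dl <= d0 / 3) by (eapply Rle_trans; [apply Rmin_r | apply Rmin_r]).
  assert (Hdl : 0 < dl)
    by (repeat apply Rmin_glb_lt; try lra; apply Rdiv_lt_0_compat; lra).
  exists dl. split; auto. intros h' t Hh' Ht.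
  rewrite Delta2_quot2 by lra. simpl.
  destruct (hnorm_near_unit h' h dl Hh Hh') as [N1 N2].
  assert (L := quot2_ge t h' ltac:(lra) ltac:(nra)).
  assert (2 * b0 * dl <= eps).
  { apply (Rmult_le_compat_l (2 * b0)) in Hdl2; [|lra].
    replace (2 * b0 * (eps / (2 * b0))) with eps in Hdl2 by (field; lra). lra. }
  assert (hnorm h' ^ 2 >= 1 - 2 * dl) by nra.
  nra.
Qed.

(* Test the majorant of [F] at [x + tau e] against the lower bound [F >= F xb]. *)
Lemma prox_subdiff_hnorm_le (x p : H) (tau : R) : prox_subdiff f x p -> 0 < tau ->
  hnorm (hsub x xb) + tau < d0 ->
  hnorm p <= c * (hnorm (hsub x xb) ^ 2 + tau ^ 2) / tau.
Proof.
  intros Hp Ht Hx. apply hnorm_bound_of_inner. intros e He.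
  set (y := hadd x (hscal tau e)).
  assert (Ty : hnorm (hsub y xb) < d0).
  { replace (hsub y xb) with (hadd (hsub x xb) (hscal tau e))
      by (apply hsub_inner_diag_uniq; unfold y; hexpand; ring).
    eapply Rle_lt_trans; [apply hnorm_triangle|]. rewrite hnorm_scal, Rabs_right by lra.
    assert (Hn := hnorm_nonneg e). nra. }
  assert (L := Hmin y Ty). assert (0 <= hnorm (hsub y xb) ^ 2) by nra.
  assert (S := F_majorant x p Hp y). unfold y in S.
  rewrite hsub_hadd_scal_l, hnorm_scal, Rabs_right, hinner_scal_r in S by lra.
  assert (U := F_majorant_xb x). fold y in S.
  assert (Hn := hnorm_nonneg e).
  assert (c * (tau * hnorm e) ^ 2 <= c * tau ^ 2).
  { apply Rmult_le_compat_l; [lra|]. rewrite Rpow_mult_distr.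
    assert (hnorm e ^ 2 <= 1) by nra. assert (0 <= tau ^ 2) by nra. nra. }
  apply (Rmult_le_reg_l tau); [lra|].
  replace (tau * - (c * (hnorm (hsub x xb) ^ 2 + tau ^ 2) / tau))
    with (- c * (hnorm (hsub x xb) ^ 2 + tau ^ 2)) by (field; lra).
  nra.
Qed.

Lemma prox_subdiff_near (Hlsc : lsc f) (y : H) (rh : R) : 0 < rh ->
  hnorm (hsub y xb) + rh < d0 -> exists v p, hnorm (hsub v y) < rh /\ prox_subdiff f v p.
Proof.
  intros Hrh Hy. apply (prox_subdiff_dense f F EF Hlsc y rh fxb Hrh).
  intros x Hx. assert (T := hnorm_sub_triangle x y xb).
  assert (L := Hmin x ltac:(lra)). assert (0 <= hnorm (hsub x xb) ^ 2) by nra. nra.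
Qed.

Lemma tangent_pair_exists (Hlsc : lsc f) (u : H) (t rh : R) : 0 < t -> 0 < rh <= 1 ->
  t * (hnorm u + 2) < d0 -> exists hs zs, hnorm (hsub hs u) < rh /\
    hnorm zs <= c * ((hnorm u + 1) ^ 2 + 1) /\
    prox_subdiff f (hadd xb (hscal t hs)) (hadd hzero (hscal t zs)).
Proof.
  intros Ht Hrh Htd. assert (HU := hnorm_nonneg u).
  destruct (prox_subdiff_near Hlsc (hadd xb (hscal t u)) (t * rh)) as [v [p [Hv Hp]]].
  { nra. }
  { rewrite hsub_hadd_scal_l, hnorm_scal, Rabs_right by lra. nra. }
  exists (hscal (/ t) (hsub v xb)), (hscal (/ t) p).
  assert (Ev : hadd xb (hscal t (hscal (/ t) (hsub v xb))) = v)
    by (apply hsub_inner_diag_uniq; hexpand; field; lra).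
  assert (Ep : hadd hzero (hscal t (hscal (/ t) p)) = p)
    by (rewrite hadd_0_l; apply hsub_inner_diag_uniq; hexpand; field; lra).
  rewrite Ev, Ep. assert (Hti : 0 < / t) by (apply Rinv_0_lt_compat; lra).
  assert (Hvu : hnorm (hsub (hscal (/ t) (hsub v xb)) u) < rh).
  { replace (hsub (hscal (/ t) (hsub v xb)) u) with (hscal (/ t) (hsub v (hadd xb (hscal t u))))
      by (apply hsub_inner_diag_uniq; hexpand; field; lra).
    rewrite hnorm_scal, Rabs_right by lra.
    apply (Rmult_lt_reg_l t); [lra|]. rewrite <- Rmult_assoc, Rinv_r, Rmult_1_l by lra. exact Hv. }
  split; [exact Hvu | split; [|exact Hp]].
  assert (Hvx : hnorm (hsub v xb) <= t * (hnorm u + 1)).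
  { assert (T := hnorm_sub_triangle v (hadd xb (hscal t u)) xb).
    rewrite hsub_hadd_scal_l, hnorm_scal, Rabs_right in T by lra. nra. }
  assert (Hn := hnorm_nonneg (hsub v xb)).
  assert (G := prox_subdiff_hnorm_le v p t Hp Ht ltac:(nra)).
  rewrite hnorm_scal, Rabs_right by lra.
  apply (Rmult_le_reg_l t); [lra|]. rewrite <- Rmult_assoc, Rinv_r, Rmult_1_l by lra.
  eapply Rle_trans; [exact G|]. apply Rle_div_of_le_mul; [lra|].
  assert (hnorm (hsub v xb) ^ 2 <= (t * (hnorm u + 1)) ^ 2) by (apply pow_incr; lra).
  nra.
Qed.

(* The domain of [D2M f xb 0] is all of [H]: approximate the ray [xb + t u] by points
   carrying proximal subgradients of size [O(t)] and extract a weakly convergent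
   subsequence of the rescaled subgradients. *)
Lemma D2M_dom_full (Hlsc : lsc f) (u : H) : exists z, D2M f xb hzero u z.
Proof.
  assert (HU := hnorm_nonneg u).
  set (tau := d0 / (hnorm u + 3)).
  assert (Htau : 0 < tau) by (apply Rdiv_lt_0_compat; lra).
  set (t := fun n : nat => tau * / (INR n + 1)).
  assert (Hn1 : forall n, 1 <= INR n + 1) by (intros n; generalize (pos_INR n); lra).
  assert (Hinv : forall n, 0 < / (INR n + 1) <= 1).
  { intros n. split; [apply Rinv_0_lt_compat; specialize (Hn1 n); lra|].
    assert (I : / (INR n + 1) <= / 1) by (apply Rinv_le_contravar; [lra | apply Hn1]).
    rewrite Rinv_1 in I. exact I. }
  assert (Ht : forall n, 0 < t n) by (intros n; specialize (Hinv n); unfold t; nra).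
  assert (Htd : forall n, t n * (hnorm u + 2) < d0).
  { intros n. specialize (Hinv n). unfold t.
    assert (tau * (hnorm u + 3) = d0) by (unfold tau; field; lra). nra. }
  assert (Hex : forall n, exists q : H * H, hnorm (hsub (fst q) u) < / (INR n + 1) /\
    hnorm (snd q) <= c * ((hnorm u + 1) ^ 2 + 1) /\
    prox_subdiff f (hadd xb (hscal (t n) (fst q))) (hadd hzero (hscal (t n) (snd q)))).
  { intros n. destruct (tangent_pair_exists Hlsc u (t n) (/ (INR n + 1)) (Ht n) (Hinv n) (Htd n))
      as [hs [zs Hq]].
    exists (hs, zs). exact Hq. }
  set (q := fun n => proj1_sig (constructive_indefinite_description _ (Hex n))).
  assert (Hq : forall n, hnorm (hsub (fst (q n)) u) < / (INR n + 1) /\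
    hnorm (snd (q n)) <= c * ((hnorm u + 1) ^ 2 + 1) /\
    prox_subdiff f (hadd xb (hscal (t n) (fst (q n)))) (hadd hzero (hscal (t n) (snd (q n)))))
    by (intros n; unfold q; destruct (constructive_indefinite_description _ _); auto).
  destruct (bounded_weak_subseq (fun n => snd (q n)) _ (fun n => proj1 (proj2 (Hq n))))
    as [k [z [Hk Hw]]].
  exists z, (fun i => t (k i)), (fun i => fst (q (k i))), (fun i => snd (q (k i))).
  split; [intros; auto | split; [| split; [| split; [exact Hw | intros i; apply Hq]]]].
  - apply Un_cv_subseq; auto. unfold t. rewrite <- (Rmult_0_r tau).
    apply Un_cv_scal, Un_cv_Rinv_INR_S.
  - apply (cv_norm_subseq (fun n => fst (q n))); auto. intros eps He.
    destruct (Rinv_INR_S_eventually_lt eps He) as [N HN]. exists N. intros n Hn.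
    specialize (HN n Hn). destruct (Hq n) as [Hqn _]. lra.
Qed.

Section Mosco.
Context (phi : H -> ereal)
  (Hmos : forall tau : nat -> R, (forall n, 0 < tau n) -> Un_cv tau 0 ->
     mosco_cv (fun n => epi (Delta2 f xb hzero (tau n))) (epi phi)).

Lemma epi_quot2 t u r : 0 < t -> epi (Delta2 f xb hzero t) u r <-> quot2 t u <= r.
Proof. intros Ht. unfold epi. rewrite Delta2_quot2 by exact Ht. simpl. tauto. Qed.

Lemma mosco_weak_limit tau v h M : (forall n, 0 < tau n) -> Un_cv tau 0 -> cv_norm v h ->
  (forall N, exists n, (N <= n)%nat /\ quot2 (tau n) (v n) <= M) -> ele (phi h) (Fin M).
Proof.
  intros Hp Ht0 Hv Hfreq. destruct (frequently_subseq _ Hfreq) as [k [Hk HkM]].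
  destruct (Hmos tau Hp Ht0) as [_ Hw]. apply (proj2 (Hw h M)).
  exists k, (fun i => v (k i)), (fun _ => M).
  split; [exact Hk | split; [| split]].
  - intros i. apply epi_quot2; auto.
  - apply cv_norm_cv_weak, cv_norm_subseq; auto.
  - apply Un_cv_const.
Qed.

Lemma mosco_liminf_eventually tau v h ph e : (forall n, 0 < tau n) -> Un_cv tau 0 ->
  cv_norm v h -> phi h = Fin ph -> 0 < e ->
  eventually (fun n => ph - e <= quot2 (tau n) (v n)).
Proof.
  intros Hp Ht0 Hv Eph He. apply NNPP. intros Hne.
  assert (E := mosco_weak_limit tau v h (ph - e) Hp Ht0 Hv).
  rewrite Eph in E. simpl in E.
  assert (ph <= ph - e); [|lra]. apply E. intros N.
  destruct (eventually_not_frequently _ Hne N) as [n [Hn1 Hn2]]. exists n. split; [auto | lra].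
Qed.

Lemma mosco_recovery tau h r : (forall n, 0 < tau n) -> Un_cv tau 0 -> ele (phi h) (Fin r) ->
  exists us rs, (forall n, quot2 (tau n) (us n) <= rs n) /\ cv_norm us h /\ Un_cv rs r.
Proof.
  intros Hp Ht0 Hr. destruct (Hmos tau Hp Ht0) as [Hn _].
  destruct (proj1 (Hn h r) Hr) as [us [rs [Hc1 [Hc2 Hc3]]]].
  exists us, rs. split; auto. intros n. apply epi_quot2; auto.
Qed.

Lemma mosco_norm_limit tau us h rs r : (forall n, 0 < tau n) -> Un_cv tau 0 ->
  (forall n, quot2 (tau n) (us n) <= rs n) -> cv_norm us h -> Un_cv rs r -> ele (phi h) (Fin r).
Proof.
  intros Hp Ht0 Hd Hu Hr. destruct (Hmos tau Hp Ht0) as [Hn _].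
  apply (proj2 (Hn h r)). exists us, rs. split; auto. intros n. apply epi_quot2; auto.
Qed.

Lemma epi_limit_unit_bounds tau h : (forall n, 0 < tau n) -> Un_cv tau 0 -> hnorm h = 1 ->
  exists ph, phi h = Fin ph /\ b0 <= ph.
Proof.
  intros Ht Ht0 Hh.
  assert (Hfin : ele (phi h) (Fin (2 * c))).
  { apply (mosco_norm_limit tau (fun _ => h) h (fun _ => 2 * c) (2 * c) Ht Ht0);
      [| apply cv_norm_const | apply Un_cv_const].
    intros n. eapply Rle_trans; [apply quot2_le; auto | rewrite Hh; lra]. }
  destruct (phi h) as [ph|] eqn:Eph; [|contradiction]. exists ph. split; auto.
  destruct (mosco_recovery tau h ph Ht Ht0 ltac:(rewrite Eph; simpl; lra))
    as [us [rs [Hur [Hus Hrs]]]].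
  apply (Rle_of_le_add_small b0 ph (1 + 2 * b0) 1); [lra | lra |]. intros e He.
  destruct (eventually_witness _ (eventually_and _ _ (eventually_cv_norm us h e Hus ltac:(lra))
     (eventually_and _ _ (eventually_Un_cv rs ph e Hrs ltac:(lra))
                         (eventually_Un_cv tau 0 (d0 / 2) Ht0 ltac:(lra)))))
    as [n [H1 [H2 H3]]].
  assert (Htn := Ht n). rewrite Rminus_0_r, Rabs_right in H3 by lra.
  destruct (hnorm_near_unit (us n) h e Hh H1) as [N1 N2].
  assert (L := quot2_ge (tau n) (us n) (Ht n) ltac:(nra)).
  specialize (Hur n). apply Rabs_def2 in H2.
  assert (hnorm (us n) ^ 2 >= 1 - 2 * e) by nra. nra.
Qed.

Section TangentSequence.
Context (h z : H) (t : nat -> R) (hs zs : nat -> H) (Hh : hnorm h = 1)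
  (Ht : forall n, 0 < t n) (Ht0 : Un_cv t 0) (Hhs : cv_norm hs h) (Hzs : cv_weak zs z)
  (Hp : forall n, prox_subdiff f (hadd xb (hscal (t n) (hs n))) (hadd hzero (hscal (t n) (zs n)))).

Lemma tangent_zs_bounded : eventually (fun n => hnorm (zs n) <= 5 * c).
Proof.
  apply (eventually_impl _ _ (eventually_and _ _ (eventually_cv_norm hs h 1 Hhs ltac:(lra))
                               (eventually_Un_cv t 0 (d0 / 4) Ht0 ltac:(lra)))).
  intros n [H1 H2]. assert (Htn := Ht n).
  rewrite Rminus_0_r, Rabs_right in H2 by lra.
  destruct (hnorm_near_unit (hs n) h 1 Hh H1) as [N1 N2].
  assert (G := prox_subdiff_hnorm_le _ _ (t n) (Hp n) Htn).
  rewrite hsub_hadd_scal_l, hadd_0_l, !hnorm_scal, Rabs_right in G by lra.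
  specialize (G ltac:(nra)).
  assert (t n * hnorm (zs n) <= t n * (5 * c)).
  { eapply Rle_trans; [apply G|].
    replace (c * ((t n * hnorm (hs n)) ^ 2 + t n ^ 2) / t n)
      with (t n * (c * (hnorm (hs n) ^ 2 + 1))) by (field; lra).
    apply Rmult_le_compat_l; [lra|]. assert (hnorm (hs n) ^ 2 <= 4) by nra. nra. }
  nra.
Qed.

Lemma tangent_inner_cv e : 0 < e ->
  eventually (fun n => Rabs (hinner (zs n) (hs n) - hinner z h) < e).
Proof.
  intros He.
  assert (He2 : 0 < e / (2 * (5 * c + 1))) by (apply Rdiv_lt_0_compat; lra).
  apply (eventually_impl _ _ (eventually_and _ _ tangent_zs_bounded
     (eventually_and _ _ (eventually_cv_norm hs h _ Hhs He2)
                         (eventually_Un_cv _ _ (e / 2) (Hzs h) ltac:(lra))))).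
  intros n [H1 [H2 H3]]. cbv beta in H3.
  replace (hinner (zs n) (hs n) - hinner z h)
    with (hinner (zs n) (hsub (hs n) h) + (hinner (zs n) h - hinner z h)) by (hexpand; ring).
  eapply Rle_lt_trans; [apply Rabs_triang|].
  assert (C1 := cauchy_schwarz (zs n) (hsub (hs n) h)).
  assert (Hn := hnorm_nonneg (hsub (hs n) h)). assert (Hz := hnorm_nonneg (zs n)).
  assert (hnorm (hsub (hs n) h) * (2 * (5 * c + 1)) < e)
    by (apply Rlt_mul_of_lt_div; [lra | exact H2]).
  assert (hnorm (zs n) * hnorm (hsub (hs n) h) <= 5 * c * hnorm (hsub (hs n) h)) by nra.
  nra.
Qed.

(* The second-order difference quotient at [(1 + s) t] in direction [hs] is bounded,
   via concavity, by the quotients at [t] along the recovery sequence, plus the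
   first-order term [2 s <zs, hs>]; in the limit [(2 s + s^2) ph <= 2 s <z, h> + O(s^2)]. *)
Lemma epi_limit_le_inner ph : phi h = Fin ph -> 0 <= ph -> ph <= hinner z h.
Proof.
  intros Eph Hph.
  destruct (mosco_recovery t h ph Ht Ht0 ltac:(rewrite Eph; simpl; lra))
    as [us [rs [Hur [Hus Hrs]]]].
  set (w := hinner z h).
  apply (Rle_of_le_add_small ph w (4 * c) 1); [lra | lra |]. intros s Hs.
  assert (Key : 2 * s * (ph - w) <= 8 * c * s ^ 2).
  { apply (Rle_of_le_add_small _ _ (9 + 16 * c) 1); [lra | lra |]. intros e He.
    assert (Hrefl : cv_norm (fun n => hsub (hscal 2 (us n)) (hs n)) h).
    { intros eps Heps.
      destruct (eventually_and _ _ (eventually_cv_norm us h (eps / 3) Hus ltac:(lra))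
                  (eventually_cv_norm hs h (eps / 3) Hhs ltac:(lra))) as [N HN].
      exists N. intros n Hn. destruct (HN n Hn) as [A1 A2].
      replace (hsub (hsub (hscal 2 (us n)) (hs n)) h)
        with (hadd (hscal 2 (hsub (us n) h)) (hopp (hsub (hs n) h)))
        by (apply hsub_inner_diag_uniq; hexpand; ring).
      eapply Rle_lt_trans; [apply hnorm_triangle|].
      rewrite hnorm_scal, hnorm_opp, Rabs_right by lra. lra. }
    assert (Ht' : forall n, 0 < (1 + s) * t n) by (intros n; specialize (Ht n); nra).
    assert (Ht'0 : Un_cv (fun n => (1 + s) * t n) 0)
      by (rewrite <- (Rmult_0_r (1 + s)); apply Un_cv_scal, Ht0).
    destruct (eventually_witness _ (eventually_and _ _
       (mosco_liminf_eventually t _ h ph e Ht Ht0 Hrefl Eph (proj1 He))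
       (eventually_and _ _ (mosco_liminf_eventually _ hs h ph e Ht' Ht'0 Hhs Eph (proj1 He))
       (eventually_and _ _ (tangent_inner_cv e (proj1 He))
       (eventually_and _ _ (eventually_cv_norm hs h e Hhs (proj1 He))
       (eventually_and _ _ (eventually_cv_norm us h e Hus (proj1 He))
                           (eventually_Un_cv rs ph e Hrs (proj1 He))))))))
       as [n [G1 [G2 [G3 [G4 [G5 G6]]]]]].
    assert (DL := quot2_dilate_le (t n) s (hs n) (us n) (zs n) (Ht n) (proj1 Hs) (Hp n)).
    assert (Hu := Hur n). apply Rabs_def2 in G3. apply Rabs_def2 in G6. fold w in G3.
    assert (Tau : hnorm (hsub (hs n) (us n)) < 2 * e).
    { assert (T := hnorm_sub_triangle (hs n) h (us n)). rewrite (hnorm_sub_sym h) in T. lra. }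
    destruct (hnorm_near_unit (hs n) h e Hh G4) as [Na1 Na2].
    assert (Hna := hnorm_nonneg (hs n)). assert (Hnau := hnorm_nonneg (hsub (hs n) (us n))).
    set (Dv := quot2 ((1 + s) * t n) (hs n)) in *.
    assert (I1 : (1 + s) ^ 2 * (ph - e) <= Dv * (1 + s) ^ 2)
      by (rewrite (Rmult_comm Dv); apply Rmult_le_compat_l; nra).
    assert (I2 : 2 * s * hinner (zs n) (hs n) <= 2 * s * (w + e)) by nra.
    assert (I3 : 2 * c * s ^ 2 * hnorm (hs n) ^ 2 <= 8 * c * s ^ 2).
    { assert (hnorm (hs n) ^ 2 <= 4) by nra. assert (0 <= s ^ 2) by nra.
      assert (s ^ 2 * hnorm (hs n) ^ 2 <= s ^ 2 * 4) by (apply Rmult_le_compat_l; nra).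
      nra. }
    assert (I4 : 4 * c * hnorm (hsub (hs n) (us n)) ^ 2 <= 16 * c * e)
      by (assert (hnorm (hsub (hs n) (us n)) ^ 2 <= 4 * e) by nra; nra).
    assert (I5 : 0 <= s ^ 2 * ph) by nra.
    assert (I6 : (1 + s) ^ 2 * e <= 4 * e)
      by (assert ((1 + s) ^ 2 <= 4) by nra; apply Rmult_le_compat_r; lra).
    assert (I7 : s * e <= e) by nra.
    nra. }
  apply (Rmult_le_reg_l (2 * s)); [lra | nra].
Qed.

End TangentSequence.

Lemma D2M_inner_ge h z : hnorm h = 1 -> D2M f xb hzero h z -> b0 <= hinner z h.
Proof.
  intros Hh [t [hs [zs [Ht [Ht0 [Hhs [Hzs Hp]]]]]]].
  destruct (epi_limit_unit_bounds t h Ht Ht0 Hh) as [ph [Eph Hph]].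
  assert (L := epi_limit_le_inner h z t hs zs Hh Ht Ht0 Hhs Hzs Hp ph Eph ltac:(lra)). lra.
Qed.
End Mosco.
End QuadraticGrowth.
End SecondOrder.

Lemma soc_second_kind_of_D2M {H : Hilbert} (f : H -> ereal) (xb : H) (beta : R) : 0 < beta ->
  (forall h z, hnorm h = 1 -> D2M f xb hzero h z -> beta <= hinner z h) ->
  soc_second_kind f xb.
Proof.
  intros Hb Hge. exists beta. split; [exact Hb|].
  intros h Hh [z Hz]. exists z. split; [exact Hz | exact (Hge h z Hh Hz)].
Qed.

(* [z] in [partial2M f xb 0 h] pairs with any [(- h, z')] in the contingent cone, so
   [<z, h> >= <z', - h>]. *)
Lemma soc_third_kind_of_D2M {H : Hilbert} (f : H -> ereal) (xb : H) (beta : R) : 0 < beta ->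
  (forall u, exists z, D2M f xb hzero u z) ->
  (forall h z, hnorm h = 1 -> D2M f xb hzero h z -> beta <= hinner z h) ->
  soc_third_kind f xb.
Proof.
  intros Hb Hdom Hge. exists beta. split; [exact Hb|]. intros h z Hh _ Hz.
  destruct (Hdom (hopp h)) as [z' Hz'].
  assert (Hopp : hnorm (hopp h) = 1) by (rewrite hnorm_opp; exact Hh).
  assert (G := Hge _ _ Hopp Hz'). specialize (Hz (hopp h) z' Hz').
  rewrite hopp_scal, !hinner_scal_r, hinner_scal_l in *. rewrite (hinner_sym h z') in Hz. lra.
Qed.

Theorem theorem5p2 (H : Hilbert) (f : H -> ereal) (xb : H) :
  proper f -> lsc f -> paraconcave f ->
  in_dom f xb -> prox_subdiff f xb hzero ->
  continuous_at f xb ->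
  twice_epi_diff_mosco f xb hzero ->
  qri_nonempty (NM f xb hzero) ->
  strict_lmin_order2 f xb ->
  soc_first_kind f xb /\ soc_second_kind f xb /\ soc_third_kind f xb.
Proof.
  intros _ Hlsc [lam [Hlam Hconc]] _ H0 _ [phi [_ Hmos]] _
    [b0 [d0 [Hb0 [Hd0 [fxb [Efxb Hmin]]]]]].
  set (c := 1 / (2 * lam)) in *.
  assert (Hc : 0 < c) by (apply Rdiv_lt_0_compat; lra).
  destruct (prox_subdiff_finite_valued f c Hc Hconc xb hzero fxb Efxb H0) as [F EF].
  assert (Hgrowth : forall x, hnorm (hsub x xb) < d0 ->
                      fxb + b0 / 2 * hnorm (hsub x xb) ^ 2 <= F x)
    by (intros x Hx; specialize (Hmin x Hx); rewrite EF in Hmin; exact Hmin).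
  assert (Hge := D2M_inner_ge f xb c Hc Hconc fxb Efxb H0 F EF b0 d0 Hb0 Hd0 Hgrowth phi Hmos).
  split; [|split].
  - exact (soc_first_kind_of_growth f xb fxb Efxb F EF b0 d0 Hb0 Hd0 Hgrowth).
  - exact (soc_second_kind_of_D2M f xb b0 Hb0 Hge).
  - apply (soc_third_kind_of_D2M f xb b0 Hb0); [|exact Hge].
    exact (D2M_dom_full f xb c Hc Hconc fxb Efxb H0 F EF b0 d0 Hb0 Hd0 Hgrowth Hlsc).
Qed.
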